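(* Let $[a,b]$ be a segment and $\lambda>0$. For the $L$-splines generated by the differential operator $L=D^2-\lambda^2$, one has \[ \sup_{\Delta}\|P_{\mathbb{S}(L,\Delta)}\|_{C[a,b]\to C[a,b]}=3, \] where the supremum is over all partitions $\Delta$ of $[a,b]$.
   Context: A partition of $[a,b]$ is $\Delta=\{a=t_1<t_2<\dots<t_n=b\}$ ($n\ge 2$), with subsegments $\Delta_i=[t_i,t_{i+1}]$. For a linear differential operator $L$ of order $2$ with constant real coefficients, $N_L=\{f\in C^2[a,b]: Lf=0 \text{ on } [a,b]\}$, and the space of $L$-splines is $\mathbb{S}(L,\Delta)=\{s\in C[a,b]: s|_{\Delta_i}\in N_L|_{\Delta_i},\ i=1,\dots,n-1\}$. Thus for $L=D^2-\lambda^2$, a spline is a continuous function which on each $\Delta_i$ is a linear combination of $e^{\lambda x}$ and $e^{-\lambda x}$. $P_{\mathbb{S}(L,\Delta)}:C[a,b]\to\mathbb{S}(L,\Delta)$ is the orthogonal projection with respect to the $L_2[a,b]$ inner product, i.e. $P f\in\mathbb{S}(L,\Delta)$ with $\langle f,s\rangle=\langle Pf,s\rangle$ for all $s\in\mathbb{S}(L,\Delta)$; its norm is $\sup\{\|Pf\|_\infty: f\in C[a,b],\ \|f\|_\infty\le 1\}$. *)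

From Stdlib Require Import Reals List.
From Coquelicot Require Import Coquelicot.
Open Scope R_scope.

(* A partition a = t_1 < t_2 < ... < t_n = b of [a,b], n >= 2, as a list of reals
   (0-based indexing: D = [t_1; ...; t_n]). *)
Definition is_partition (a b : R) (D : list R) : Prop :=
  (2 <= length D)%nat /\
  nth 0 D 0 = a /\
  nth (pred (length D)) D 0 = b /\
  (forall i : nat, (S i < length D)%nat -> nth i D 0 < nth (S i) D 0).

Definition seg (a b : R) : R -> Prop := fun x => a <= x <= b.

Definition is_Lspline (a b lam : R) (D : list R) (s : R -> R) : Prop :=
  continuous_on (seg a b) s /\
  (forall i : nat, (S i < length D)%nat ->
     exists c1 c2 : R, forall x : R, nth i D 0 <= x <= nth (S i) D 0 ->
       s x = c1 * exp (lam * x) + c2 * exp (- lam * x)).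

Definition L2ip (a b : R) (f g : R -> R) : R := RInt (fun x => f x * g x) a b.

Definition is_orth_proj (a b lam : R) (D : list R) (f p : R -> R) : Prop :=
  is_Lspline a b lam D p /\
  (forall s : R -> R, is_Lspline a b lam D s -> L2ip a b f s = L2ip a b p s).

Definition proj_values (a b lam : R) (D : list R) (y : R) : Prop :=
  exists (f p : R -> R) (x : R),
    continuous_on (seg a b) f /\
    (forall t, seg a b t -> Rabs (f t) <= 1) /\
    is_orth_proj a b lam D f p /\
    seg a b x /\ y = Rabs (p x).

Definition proj_opnorm (a b lam : R) (D : list R) : Rbar :=
  Lub_Rbar (proj_values a b lam D).

From Stdlib Require Import Reals List Lra Lia Psatz.
From Coquelicot Require Import Coquelicot.
Open Scope R_scope.

(* Write P f = sum_j c_j N_j in the basis of hat splines N_j.  The normal equations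
   <P f, N_j> = <f, N_j> form a tridiagonal system with nonnegative off-diagonal entries, and
   on every subsegment the exponential Lagrange basis phi0, phi1 satisfies
   int phi1^2 - int phi0 phi1 >= (1/3) int phi1, with equality in the polynomial limit.
   Since |<f, N_j>| <= int N_j, diagonal dominance at an index maximising |c_j| gives
   |c_j| <= 3, and P f is a combination of neighbouring c_j with nonnegative weights of sum <= 1.

   For the lower bound, refine the mesh geometrically with ratio q towards b, so that the
   subsegments there are almost polynomial, and let f consist of bumps 1 - (2y - 1)^(2N) of
   alternating signs.  Solving only the left halves of the normal equations gives coefficients
   of alternating sign whose moduli approach 3 - O(q + 1/N) geometrically fast; the discarded
   right halves are O(q) relative to int N_j, so by the same dominance estimate the last
   coefficient c_n = (P f)(b) is close to 3 as well. *)

Lemma cosh_pos x : 0 < cosh x.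
Proof. unfold cosh; pose proof (exp_pos x); pose proof (exp_pos (- x)); lra. Qed.

Lemma cosh_ge_1 x : 1 <= cosh x.
Proof.
  unfold cosh; rewrite exp_Ropp. pose proof (exp_pos x) as H.
  set (E := exp x) in *.
  assert (E + / E - 2 = (E - 1) ^ 2 / E) by (field; lra).
  assert (0 <= (E - 1) ^ 2 / E) by (apply Rdiv_le_0_compat; [apply pow2_ge_0 | lra]).
  lra.
Qed.

Lemma sinh_le x y : x <= y -> sinh x <= sinh y.
Proof. intros [H | <-]; [left; now apply sinh_lt | lra]. Qed.

Lemma sinh_nonneg x : 0 <= x -> 0 <= sinh x.
Proof. intros; rewrite <- sinh_0; now apply sinh_le. Qed.

Lemma sinh_pos x : 0 < x -> 0 < sinh x.
Proof. intros; rewrite <- sinh_0; now apply sinh_lt. Qed.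

Lemma sinh_nonpos x : x <= 0 -> sinh x <= 0.
Proof. intros; rewrite <- sinh_0; now apply sinh_le. Qed.

Lemma sinh_add x y : sinh (x + y) = sinh x * cosh y + cosh x * sinh y.
Proof.
  unfold sinh, cosh; rewrite !exp_Ropp, exp_plus.
  pose proof (exp_pos x); pose proof (exp_pos y); field; lra.
Qed.

Lemma sinh_superadditive x y : 0 <= x -> 0 <= y -> sinh x + sinh y <= sinh (x + y).
Proof.
  intros Hx Hy. rewrite sinh_add. pose proof (cosh_ge_1 x); pose proof (cosh_ge_1 y).
  pose proof (sinh_nonneg x Hx); pose proof (sinh_nonneg y Hy). nra.
Qed.

Lemma sinh_double t : sinh (2 * t) = 2 * sinh t * cosh t.
Proof.
  unfold sinh, cosh. replace (2 * t) with (t + t) by ring. rewrite !exp_Ropp, exp_plus.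
  pose proof (exp_pos t). field. lra.
Qed.

Lemma cosh_double t : cosh (2 * t) = 2 * cosh t ^ 2 - 1.
Proof.
  unfold cosh. replace (2 * t) with (t + t) by ring. rewrite !exp_Ropp, exp_plus.
  pose proof (exp_pos t). field. lra.
Qed.

Lemma nonneg_of_deriv_nonneg (F dF : R -> R) (x : R) :
  (forall y, 0 <= y <= x -> is_derive F y (dF y)) ->
  (forall y, 0 <= y <= x -> 0 <= dF y) -> 0 <= F 0 -> 0 <= x -> 0 <= F x.
Proof.
  intros HD Hpos H0 [Hx | <-]; [|exact H0].
  destruct (MVT_cor2 F dF 0 x Hx) as [c [Hc1 Hc2]].
  { intros c Hc. apply is_derive_Reals. apply HD. lra. }
  assert (0 <= dF c) by (apply Hpos; lra). nra.
Qed.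

Ltac derive_hyperbolic := intros ? _; unfold sinh, cosh; auto_derive; auto; field.

Lemma id_le_sinh x : 0 <= x -> x <= sinh x.
Proof.
  intros Hx. enough (0 <= sinh x - x) by lra.
  apply (nonneg_of_deriv_nonneg (fun y => sinh y - y) (fun y => cosh y - 1)); auto.
  - derive_hyperbolic.
  - intros y _. pose proof (cosh_ge_1 y); lra.
  - rewrite sinh_0; lra.
Qed.

Lemma sinh_le_mul_cosh x : 0 <= x -> sinh x <= x * cosh x.
Proof.
  intros Hx. enough (0 <= x * cosh x - sinh x) by lra.
  apply (nonneg_of_deriv_nonneg (fun y => y * cosh y - sinh y) (fun y => y * sinh y)); auto.
  - derive_hyperbolic.
  - intros y [Hy _]. pose proof (sinh_nonneg y Hy). nra.
  - rewrite sinh_0; lra.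
Qed.

Lemma sq_half_le_cosh_sub_1 x : 0 <= x -> x ^ 2 / 2 <= cosh x - 1.
Proof.
  intros Hx. enough (0 <= cosh x - 1 - x ^ 2 / 2) by lra.
  apply (nonneg_of_deriv_nonneg (fun y => cosh y - 1 - y ^ 2 / 2) (fun y => sinh y - y)); auto.
  - derive_hyperbolic.
  - intros y [Hy _]. pose proof (id_le_sinh y Hy). lra.
  - rewrite cosh_0; lra.
Qed.

Lemma cosh_sub_1_le x : 0 <= x -> cosh x - 1 <= x ^ 2 * cosh x / 2.
Proof.
  intros Hx. enough (0 <= x ^ 2 * cosh x / 2 - cosh x + 1) by lra.
  apply (nonneg_of_deriv_nonneg (fun y => y ^ 2 * cosh y / 2 - cosh y + 1)
    (fun y => (y * cosh y - sinh y) + y ^ 2 * sinh y / 2)); auto.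
  - derive_hyperbolic.
  - intros y [Hy _]. pose proof (sinh_nonneg y Hy). pose proof (sinh_le_mul_cosh y Hy).
    assert (0 <= y ^ 2 * sinh y) by (apply Rmult_le_pos; [apply pow2_ge_0 | lra]). lra.
  - rewrite cosh_0; lra.
Qed.

Lemma sinh_sub_id_le x : 0 <= x -> sinh x - x <= x ^ 3 * cosh x / 6.
Proof.
  intros Hx. enough (0 <= x ^ 3 * cosh x / 6 - sinh x + x) by lra.
  apply (nonneg_of_deriv_nonneg (fun y => y ^ 3 * cosh y / 6 - sinh y + y)
    (fun y => (y ^ 2 * cosh y / 2 - cosh y + 1) + y ^ 3 * sinh y / 6)); auto.
  - derive_hyperbolic.
  - intros y [Hy _]. pose proof (sinh_nonneg y Hy). pose proof (cosh_sub_1_le y Hy).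
    assert (0 <= y ^ 3 * sinh y) by (apply Rmult_le_pos; [apply pow_le; lra | lra]). lra.
  - rewrite sinh_0; lra.
Qed.

Lemma cosh_le_2 x : 0 <= x <= 1 -> cosh x <= 2.
Proof.
  intros Hx. pose proof (cosh_sub_1_le x (proj1 Hx)). pose proof (cosh_pos x).
  assert (x ^ 2 <= 1) by nra. nra.
Qed.

Lemma cosh_le_1_add_sq x : 0 <= x <= 1 -> cosh x <= 1 + x ^ 2.
Proof.
  intros Hx. pose proof (cosh_sub_1_le x (proj1 Hx)). pose proof (cosh_le_2 x Hx).
  assert (0 <= x ^ 2) by nra. nra.
Qed.

Lemma three_mul_le_sinh_cosh_tanh t : 0 <= t -> 3 * t <= sinh t * cosh t + 2 * tanh t.
Proof.
  intros Ht. enough (0 <= sinh t * cosh t + 2 * tanh t - 3 * t) by lra.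
  apply (nonneg_of_deriv_nonneg (fun y => sinh y * cosh y + 2 * tanh y - 3 * y)
    (fun y => 2 * sinh y ^ 4 / cosh y ^ 2)); auto.
  - intros y _. pose proof (cosh_pos y) as Hc. unfold tanh, sinh, cosh in *.
    pose proof (exp_pos y). pose proof (exp_pos (- y)).
    auto_derive; [lra|]. rewrite !exp_Ropp in *. field. split; nra.
  - intros y _. pose proof (cosh_pos y).
    apply Rdiv_le_0_compat; [|apply pow_lt; lra].
    replace (2 * sinh y ^ 4) with (2 * (sinh y ^ 2) ^ 2) by ring.
    apply Rmult_le_pos; [lra | apply pow2_ge_0].
  - unfold tanh. rewrite sinh_0, cosh_0; lra.
Qed.

Lemma ex_derive_continuous_R (f : R -> R) x : ex_derive f x -> continuous f x.
Proof. exact (ex_derive_continuous (V := R_NormedModule) f x). Qed.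

Lemma continuous_Rmult (f g : R -> R) x :
  continuous f x -> continuous g x -> continuous (fun y => f y * g y) x.
Proof. exact (continuous_mult f g x). Qed.

Lemma ex_RInt_continuous_R (f : R -> R) a b : (forall x, continuous f x) -> ex_RInt f a b.
Proof. intros; apply (ex_RInt_continuous (V := R_CompleteNormedModule)); auto. Qed.

Lemma RInt_point_R (f : R -> R) a : RInt f a a = 0.
Proof. exact (RInt_point (V := R_CompleteNormedModule) a f). Qed.

Lemma RInt_Chasles_R (f : R -> R) a b c : ex_RInt f a b -> ex_RInt f b c ->
  RInt f a b + RInt f b c = RInt f a c.
Proof. apply (RInt_Chasles f). Qed.

Lemma RInt_lin_comb (f g : R -> R) a b c0 c1 : ex_RInt f a b -> ex_RInt g a b ->
  RInt (fun x => c0 * f x + c1 * g x) a b = c0 * RInt f a b + c1 * RInt g a b.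
Proof.
  intros Hf Hg. transitivity (RInt (fun x => c0 * f x) a b + RInt (fun x => c1 * g x) a b).
  - apply (RInt_plus (fun x => c0 * f x) (fun x => c1 * g x));
      [apply (ex_RInt_scal f) | apply (ex_RInt_scal g)]; auto.
  - f_equal; [apply (RInt_scal f) | apply (RInt_scal g)]; auto.
Qed.

Lemma RInt_const_R (c a b : R) : RInt (fun _ => c) a b = (b - a) * c.
Proof. rewrite RInt_const. reflexivity. Qed.

(* Coquelicot's integrals live in a normed-module carrier convertible to R; [ring], [field]
   and [lra] only recognise equalities stated at type R. *)
Ltac eq_in_R := lazymatch goal with |- ?a = ?b => change (@eq R a b) end.

Lemma RInt_antiderivative (F f : R -> R) a b :
  (forall x, is_derive F x (f x)) -> (forall x, continuous f x) -> RInt f a b = F b - F a.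
Proof.
  intros HD HC. apply is_RInt_unique, (is_RInt_derive F f a b (fun x _ => HD x) (fun x _ => HC x)).
Qed.

(* The basis of span{exp(lam x), exp(-lam x)} dual to evaluation at x0 and x1. *)
Definition phi0 (lam x0 x1 x : R) := sinh (lam * (x1 - x)) / sinh (lam * (x1 - x0)).
Definition phi1 (lam x0 x1 x : R) := sinh (lam * (x - x0)) / sinh (lam * (x1 - x0)).

Definition mass lam x0 x1 : R := RInt (phi1 lam x0 x1) x0 x1.
Definition gram_off lam x0 x1 : R := RInt (fun x => phi0 lam x0 x1 x * phi1 lam x0 x1 x) x0 x1.
Definition gram_diag lam x0 x1 : R := RInt (fun x => phi1 lam x0 x1 x * phi1 lam x0 x1 x) x0 x1.

Section LocalBasis.
Variables (lam x0 x1 : R).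
Hypothesis Hlam : 0 < lam.
Hypothesis Hx : x0 < x1.
Let mu := lam * (x1 - x0).

Lemma mu_pos : 0 < mu.
Proof. unfold mu. apply Rmult_lt_0_compat; lra. Qed.

Lemma sinh_mu_pos : 0 < sinh mu.
Proof. apply sinh_pos, mu_pos. Qed.

Lemma exp_mu_gt_1 : 1 < exp mu.
Proof. rewrite <- exp_0. apply exp_increasing, mu_pos. Qed.

Lemma phi0_nonneg x : x <= x1 -> 0 <= phi0 lam x0 x1 x.
Proof.
  intros H. apply Rdiv_le_0_compat; [|apply sinh_mu_pos]. apply sinh_nonneg. nra.
Qed.

Lemma phi1_nonneg x : x0 <= x -> 0 <= phi1 lam x0 x1 x.
Proof.
  intros H. apply Rdiv_le_0_compat; [|apply sinh_mu_pos]. apply sinh_nonneg. nra.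
Qed.

Lemma phi0_nonpos x : x1 <= x -> phi0 lam x0 x1 x <= 0.
Proof.
  intros H. unfold phi0, Rdiv. apply Rmult_le_0_r; [apply sinh_nonpos; nra|].
  left; apply Rinv_0_lt_compat, sinh_mu_pos.
Qed.

Lemma phi1_nonpos x : x <= x0 -> phi1 lam x0 x1 x <= 0.
Proof.
  intros H. unfold phi1, Rdiv. apply Rmult_le_0_r; [apply sinh_nonpos; nra|].
  left; apply Rinv_0_lt_compat, sinh_mu_pos.
Qed.

Lemma phi0_ge_1 x : x <= x0 -> 1 <= phi0 lam x0 x1 x.
Proof.
  intros H. pose proof sinh_mu_pos; unfold mu in *. unfold phi0.
  apply Rcomplements.Rle_div_r; [lra|]. rewrite Rmult_1_l. apply sinh_le. nra.
Qed.

Lemma phi1_ge_1 x : x1 <= x -> 1 <= phi1 lam x0 x1 x.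
Proof.
  intros H. pose proof sinh_mu_pos; unfold mu in *. unfold phi1.
  apply Rcomplements.Rle_div_r; [lra|]. rewrite Rmult_1_l. apply sinh_le. nra.
Qed.

Lemma phi0_add_phi1_le_1 x : x0 <= x <= x1 -> phi0 lam x0 x1 x + phi1 lam x0 x1 x <= 1.
Proof.
  intros H. pose proof sinh_mu_pos; unfold mu in *. unfold phi0, phi1, Rdiv.
  rewrite <- Rmult_plus_distr_r.
  apply Rcomplements.Rle_div_l; [lra|]. rewrite Rmult_1_l.
  replace (lam * (x1 - x0)) with (lam * (x1 - x) + lam * (x - x0)) by ring.
  apply sinh_superadditive; nra.
Qed.

Lemma phi0_le_1 x : x0 <= x <= x1 -> phi0 lam x0 x1 x <= 1.
Proof. intros H. pose proof (phi0_add_phi1_le_1 x H). pose proof (phi1_nonneg x (proj1 H)). lra. Qed.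

Lemma phi1_le_1 x : x0 <= x <= x1 -> phi1 lam x0 x1 x <= 1.
Proof. intros H. pose proof (phi0_add_phi1_le_1 x H). pose proof (phi0_nonneg x (proj2 H)). lra. Qed.

Lemma phi0_left : phi0 lam x0 x1 x0 = 1.
Proof. pose proof sinh_mu_pos; unfold mu in *. unfold phi0. field. lra. Qed.

Lemma phi0_right : phi0 lam x0 x1 x1 = 0.
Proof. unfold phi0. rewrite Rminus_diag, Rmult_0_r, sinh_0. apply Rdiv_0_l. Qed.

Lemma phi1_left : phi1 lam x0 x1 x0 = 0.
Proof. unfold phi1. rewrite Rminus_diag, Rmult_0_r, sinh_0. apply Rdiv_0_l. Qed.

Lemma phi1_right : phi1 lam x0 x1 x1 = 1.
Proof. pose proof sinh_mu_pos; unfold mu in *. unfold phi1. field. lra. Qed.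

Lemma continuous_phi0 x : continuous (phi0 lam x0 x1) x.
Proof.
  pose proof sinh_mu_pos; unfold mu in *. apply ex_derive_continuous_R. unfold phi0, sinh in *.
  auto_derive. lra.
Qed.

Lemma continuous_phi1 x : continuous (phi1 lam x0 x1) x.
Proof.
  pose proof sinh_mu_pos; unfold mu in *. apply ex_derive_continuous_R. unfold phi1, sinh in *.
  auto_derive. lra.
Qed.

Lemma phi0_exp x : phi0 lam x0 x1 x =
  (- exp (- (lam * x1)) / 2 / sinh mu) * exp (lam * x)
  + (exp (lam * x1) / 2 / sinh mu) * exp (- lam * x).
Proof.
  unfold phi0, mu. replace (- lam * x) with (- (lam * x)) by ring. unfold sinh at 1.
  replace (lam * (x1 - x)) with (lam * x1 + - (lam * x)) by ring.
  replace (- (lam * x1 + - (lam * x))) with (lam * x + - (lam * x1)) by ring.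
  rewrite !exp_plus. unfold Rdiv. ring.
Qed.

Lemma phi1_exp x : phi1 lam x0 x1 x =
  (exp (- (lam * x0)) / 2 / sinh mu) * exp (lam * x)
  + (- exp (lam * x0) / 2 / sinh mu) * exp (- lam * x).
Proof.
  unfold phi1, mu. replace (- lam * x) with (- (lam * x)) by ring. unfold sinh at 1.
  replace (lam * (x - x0)) with (lam * x + - (lam * x0)) by ring.
  replace (- (lam * x + - (lam * x0))) with (lam * x0 + - (lam * x)) by ring.
  rewrite !exp_plus. unfold Rdiv. ring.
Qed.

Lemma exp_comb_interp c1 c2 x :
  (c1 * exp (lam * x0) + c2 * exp (- lam * x0)) * phi0 lam x0 x1 x
  + (c1 * exp (lam * x1) + c2 * exp (- lam * x1)) * phi1 lam x0 x1 x
  = c1 * exp (lam * x) + c2 * exp (- lam * x).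
Proof.
  pose proof sinh_mu_pos as HS. rewrite phi0_exp, phi1_exp. unfold mu in *.
  replace (lam * (x1 - x0)) with (lam * x1 + - (lam * x0)) in * by ring.
  unfold sinh in *.
  replace (- (lam * x1 + - (lam * x0))) with (lam * x0 + - (lam * x1)) in * by ring.
  rewrite !exp_plus in *.
  replace (- lam * x) with (- (lam * x)) by ring.
  replace (- lam * x0) with (- (lam * x0)) by ring.
  replace (- lam * x1) with (- (lam * x1)) by ring.
  rewrite !exp_Ropp in *.
  pose proof (exp_pos (lam * x0)). pose proof (exp_pos (lam * x1)). pose proof (exp_pos (lam * x)).
  assert (0 < exp (lam * x1) * exp (lam * x1) - exp (lam * x0) * exp (lam * x0)).
  { replace (exp (lam * x1) * exp (lam * x1) - exp (lam * x0) * exp (lam * x0)) with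
      ((exp (lam * x1) * / exp (lam * x0) - exp (lam * x0) * / exp (lam * x1)) / 2
       * (2 * exp (lam * x0) * exp (lam * x1))) by (field; lra).
    apply Rmult_lt_0_compat; nra. }
  field. repeat split; lra.
Qed.

Lemma mass_eq : mass lam x0 x1 = (cosh mu - 1) / (lam * sinh mu).
Proof.
  pose proof sinh_mu_pos as HS. unfold mass, mu in *.
  rewrite (RInt_antiderivative (fun x => cosh (lam * (x - x0)) / (lam * sinh (lam * (x1 - x0))))).
  - rewrite Rminus_diag, Rmult_0_r, cosh_0. field. split; lra.
  - intros x. unfold phi1, sinh, cosh, Rminus in *. auto_derive; [lra|]. eq_in_R. field. lra.
  - exact continuous_phi1.
Qed.

Lemma RInt_phi0 : RInt (phi0 lam x0 x1) x0 x1 = mass lam x0 x1.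
Proof.
  pose proof sinh_mu_pos as HS. rewrite mass_eq. unfold mu in *.
  rewrite (RInt_antiderivative (fun x => - cosh (lam * (x1 - x)) / (lam * sinh (lam * (x1 - x0))))).
  - eq_in_R. rewrite Rminus_diag, Rmult_0_r, cosh_0. field. split; lra.
  - intros x. unfold phi0, sinh, cosh, Rminus in *. auto_derive; [lra|]. eq_in_R. field. lra.
  - exact continuous_phi0.
Qed.

Lemma gram_diag_eq : gram_diag lam x0 x1 = (sinh mu * cosh mu - mu) / (2 * lam * sinh mu ^ 2).
Proof.
  pose proof sinh_mu_pos as HS. pose proof exp_mu_gt_1. unfold gram_diag, mu in *.
  rewrite (RInt_antiderivative (fun x => (sinh (lam * (x - x0)) * cosh (lam * (x - x0)) / (2 * lam)
                                - (x - x0) / 2) / sinh (lam * (x1 - x0)) ^ 2)).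
  - rewrite Rminus_diag, Rmult_0_r, cosh_0, sinh_0. field. lra.
  - intros x. unfold phi1, sinh, cosh, Rminus in *. auto_derive; [lra|]. eq_in_R.
    rewrite !exp_Ropp in *. pose proof (exp_pos (lam * (x + - x0))).
    field. repeat split; try lra; nra.
  - intros y. apply continuous_Rmult; apply continuous_phi1.
Qed.

Lemma RInt_phi0_sq :
  RInt (fun x => phi0 lam x0 x1 x * phi0 lam x0 x1 x) x0 x1 = gram_diag lam x0 x1.
Proof.
  pose proof sinh_mu_pos as HS. pose proof exp_mu_gt_1. rewrite gram_diag_eq. unfold mu in *.
  rewrite (RInt_antiderivative (fun x => - (sinh (lam * (x1 - x)) * cosh (lam * (x1 - x)) / (2 * lam)
                                - (x1 - x) / 2) / sinh (lam * (x1 - x0)) ^ 2)).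
  - eq_in_R. rewrite Rminus_diag, Rmult_0_r, cosh_0, sinh_0. field. lra.
  - intros x. unfold phi0, sinh, cosh, Rminus in *. auto_derive; [lra|]. eq_in_R.
    rewrite !exp_Ropp in *. pose proof (exp_pos (lam * (x1 + - x))).
    field. repeat split; try lra; nra.
  - intros y. apply continuous_Rmult; apply continuous_phi0.
Qed.

Lemma gram_off_eq : gram_off lam x0 x1 = (mu * cosh mu - sinh mu) / (2 * lam * sinh mu ^ 2).
Proof.
  pose proof sinh_mu_pos as HS. pose proof exp_mu_gt_1. unfold gram_off, mu in *.
  rewrite (RInt_antiderivative (fun x => (x * cosh (lam * (x1 - x0)) / 2 -
      (sinh (lam * (x - x0)) * cosh (lam * (x1 - x)) - cosh (lam * (x - x0)) * sinh (lam * (x1 - x)))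
        / (4 * lam)) / sinh (lam * (x1 - x0)) ^ 2)).
  - rewrite !Rminus_diag, Rmult_0_r, cosh_0, sinh_0. field. lra.
  - intros x. unfold phi0, phi1, sinh, cosh, Rminus in *. auto_derive; [lra|]. eq_in_R.
    replace (lam * (x1 + - x0)) with (lam * (x1 + - x) + lam * (x + - x0)) in * by ring.
    rewrite !exp_Ropp, !exp_plus in *.
    pose proof (exp_pos (lam * (x + - x0))). pose proof (exp_pos (lam * (x1 + - x))).
    field. repeat split; try lra; nra.
  - intros y. apply continuous_Rmult; [apply continuous_phi0 | apply continuous_phi1].
Qed.

Lemma mass_pos : 0 < mass lam x0 x1.
Proof.
  rewrite mass_eq. pose proof sinh_mu_pos. pose proof mu_pos.
  pose proof (sq_half_le_cosh_sub_1 mu ltac:(lra)).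
  apply Rdiv_lt_0_compat; [nra | apply Rmult_lt_0_compat; lra].
Qed.

Lemma gram_off_nonneg : 0 <= gram_off lam x0 x1.
Proof.
  rewrite gram_off_eq. pose proof mu_pos. pose proof sinh_mu_pos.
  pose proof (sinh_le_mul_cosh mu ltac:(lra)).
  apply Rdiv_le_0_compat; [lra | apply Rmult_lt_0_compat; [lra | apply pow_lt; lra]].
Qed.

(* With t = mu / 2 this is three_mul_le_sinh_cosh_tanh.  It is sharp as mu -> 0, which is
   where the constant 3 of the theorem comes from. *)
Lemma mass_div3_le_gram_gap : mass lam x0 x1 / 3 <= gram_diag lam x0 x1 - gram_off lam x0 x1.
Proof.
  rewrite mass_eq, gram_diag_eq, gram_off_eq.
  pose proof mu_pos as Hm.
  set (T := mu / 2). assert (HT : mu = 2 * T) by (unfold T; field).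
  rewrite HT, sinh_double, cosh_double.
  pose proof (three_mul_le_sinh_cosh_tanh T ltac:(unfold T; lra)). unfold tanh in *.
  pose proof (cosh_pos T). pose proof (sinh_pos T ltac:(unfold T; lra)).
  set (s := sinh T) in *. set (c := cosh T) in *.
  assert (E : (2 * s * c * (2 * c ^ 2 - 1) - 2 * T) / (2 * lam * (2 * s * c) ^ 2) -
    (2 * T * (2 * c ^ 2 - 1) - 2 * s * c) / (2 * lam * (2 * s * c) ^ 2) -
    (2 * c ^ 2 - 1 - 1) / (lam * (2 * s * c)) / 3
    = (4 * c ^ 2 * (s * c + 2 * (s / c) - 3 * T)) / (6 * lam * (2 * s * c) ^ 2))
    by (field; repeat split; lra).
  assert (0 <= (4 * c ^ 2 * (s * c + 2 * (s / c) - 3 * T)) / (6 * lam * (2 * s * c) ^ 2)).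
  { apply Rdiv_le_0_compat; [nra|]. apply Rmult_lt_0_compat; [lra | apply pow_lt; nra]. }
  lra.
Qed.

Lemma gram_gap_le_mass : 3 / cosh mu ^ 2 * (gram_diag lam x0 x1 - gram_off lam x0 x1) <= mass lam x0 x1.
Proof.
  rewrite mass_eq, gram_diag_eq, gram_off_eq.
  pose proof mu_pos as Hm. pose proof sinh_mu_pos as HSp.
  pose proof (sq_half_le_cosh_sub_1 mu ltac:(lra)). pose proof (id_le_sinh mu ltac:(lra)).
  pose proof (sinh_sub_id_le mu ltac:(lra)). pose proof (cosh_ge_1 mu).
  set (S := sinh mu) in *. set (C := cosh mu) in *.
  assert (E1 : (S * C - mu) / (2 * lam * S ^ 2) - (mu * C - S) / (2 * lam * S ^ 2)
            = (S - mu) * (C + 1) / (2 * lam * S ^ 2)) by (field; lra).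
  assert (E2 : 3 / C ^ 2 * ((S - mu) * (C + 1) / (2 * lam * S ^ 2))
            = (3 * (S - mu) * (C + 1) / C ^ 2) / (2 * lam * S ^ 2)) by (field; lra).
  assert (E3 : (C - 1) / (lam * S) = (2 * S * (C - 1)) / (2 * lam * S ^ 2)) by (field; lra).
  rewrite E1, E2, E3. apply Rmult_le_compat_r.
  { left. apply Rinv_0_lt_compat, Rmult_lt_0_compat; [lra | apply pow_lt; lra]. }
  assert (3 * (S - mu) * (C + 1) / C ^ 2 <= mu ^ 3).
  { apply Rcomplements.Rle_div_l; [apply pow_lt; lra|].
    assert (3 * (S - mu) * (C + 1) <= 3 * (mu ^ 3 * C / 6) * (2 * C)) by nra. nra. }
  assert (mu ^ 3 <= 2 * S * (C - 1)) by nra. lra.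
Qed.

Lemma len_div4_le_mass : mu <= 1 -> (x1 - x0) / 4 <= mass lam x0 x1.
Proof.
  intros Hm1. rewrite mass_eq.
  pose proof mu_pos as Hm. pose proof sinh_mu_pos as HSp.
  pose proof (sq_half_le_cosh_sub_1 mu ltac:(lra)). pose proof (sinh_le_mul_cosh mu ltac:(lra)).
  pose proof (cosh_le_2 mu ltac:(lra)).
  assert (Hh : x1 - x0 = mu / lam) by (unfold mu; field; lra). rewrite Hh.
  assert (E : (cosh mu - 1) / (lam * sinh mu) - mu / lam / 4
              = (4 * (cosh mu - 1) - mu * sinh mu) / (4 * lam * sinh mu)) by (field; lra).
  assert (0 <= (4 * (cosh mu - 1) - mu * sinh mu) / (4 * lam * sinh mu))
    by (apply Rdiv_le_0_compat; nra).
  lra.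
Qed.

Lemma RInt_le_len (F : R -> R) a b : a <= b -> (forall x, continuous F x) ->
  (forall x, a <= x <= b -> F x <= 1) -> RInt F a b <= b - a.
Proof.
  intros H HF HF1. replace (b - a) with (RInt (fun _ => 1) a b) by (rewrite RInt_const_R; eq_in_R; ring).
  apply RInt_le; auto; try apply ex_RInt_continuous_R; auto using continuous_const.
  intros; apply HF1; lra.
Qed.

Lemma mass_le_len : mass lam x0 x1 <= x1 - x0.
Proof. apply RInt_le_len; [lra | apply continuous_phi1 | apply phi1_le_1]. Qed.

Lemma gram_diag_le_len : gram_diag lam x0 x1 <= x1 - x0.
Proof.
  apply RInt_le_len; [lra | intros; apply continuous_Rmult; apply continuous_phi1|].
  intros x Hx'. pose proof (phi1_nonneg x (proj1 Hx')). pose proof (phi1_le_1 x Hx'). nra.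
Qed.

Lemma gram_off_le_len : gram_off lam x0 x1 <= x1 - x0.
Proof.
  apply RInt_le_len;
    [lra | intros; apply continuous_Rmult; [apply continuous_phi0 | apply continuous_phi1]|].
  intros x Hx'. pose proof (phi0_nonneg x (proj2 Hx')). pose proof (phi0_le_1 x Hx').
  pose proof (phi1_nonneg x (proj1 Hx')). pose proof (phi1_le_1 x Hx'). nra.
Qed.

Lemma len_div12_le_gram_gap : mu <= 1 -> (x1 - x0) / 12 <= gram_diag lam x0 x1 - gram_off lam x0 x1.
Proof. intros H. pose proof (len_div4_le_mass H). pose proof mass_div3_le_gram_gap. lra. Qed.

Lemma three_sub_9q_le_div_cosh_sq (q : R) :
  0 < q <= 1/2 -> mu <= q -> 3 - 9 * q <= 3 / cosh mu ^ 2.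
Proof.
  intros Hq Hmu. pose proof mu_pos. pose proof (cosh_le_1_add_sq mu ltac:(lra)) as CH.
  pose proof (cosh_ge_1 mu).
  apply Rcomplements.Rle_div_r; [apply pow_lt; lra|].
  assert (cosh mu ^ 2 <= (1 + q ^ 2) ^ 2).
  { apply pow_incr. assert (mu ^ 2 <= q ^ 2) by (apply pow_incr; lra). lra. }
  assert ((1 + q ^ 2) ^ 2 * (3 - 9 * q) <= 3) by nra.
  destruct (Rle_dec 0 (3 - 9 * q)); nra.
Qed.

(* One step of the recursion defining approx_coef below, on a subsegment with mu <= q. *)
Lemma approx_step (q theta a g : R) :
  0 < q <= 1/2 -> 0 <= theta -> mu <= q ->
  mass lam x0 x1 - theta * (x1 - x0) <= a <= mass lam x0 x1 -> 0 <= a -> 0 <= g <= 3 ->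
  let g' := (a + gram_off lam x0 x1 * g) / gram_diag lam x0 x1 in
  0 <= g' <= 3 /\
  (3 - (9 * q + 12 * theta)) - g' <= 11/12 * Rmax 0 ((3 - (9 * q + 12 * theta)) - g).
Proof.
  intros Hq Hth Hmu Ha Ha0 Hg g'.
  pose proof mass_div3_le_gram_gap as K. pose proof gram_off_nonneg as HB.
  pose proof gram_gap_le_mass as VR. pose proof (len_div12_le_gram_gap ltac:(lra)) as HCB.
  pose proof gram_diag_le_len as CL. pose proof (three_sub_9q_le_div_cosh_sq q Hq Hmu) as R1.
  unfold g'. set (B := gram_off lam x0 x1) in *. set (C := gram_diag lam x0 x1) in *.
  set (V := mass lam x0 x1) in *. set (k := 3 - (9 * q + 12 * theta)).
  assert (HC : 0 < C) by lra.
  assert (Hka : k * (C - B) <= a).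
  { assert ((3 - 9 * q) * (C - B) <= V).
    { eapply Rle_trans; [|apply VR]. apply Rmult_le_compat_r; lra. }
    assert (theta * (x1 - x0) <= theta * (12 * (C - B))) by (apply Rmult_le_compat_l; lra).
    unfold k. lra. }
  split; [split|].
  - apply Rdiv_le_0_compat; nra.
  - apply Rcomplements.Rle_div_l; nra.
  - replace (k - (a + B * g) / C) with ((k * C - a - B * g) / C) by (field; lra).
    apply Rcomplements.Rle_div_l; [lra|].
    pose proof (Rmax_l 0 (k - g)). pose proof (Rmax_r 0 (k - g)). nra.
Qed.
End LocalBasis.

Definition tridiag (l d r e : nat -> R) (j : nat) : R :=
  l j * e (pred j) + d j * e j + r j * e (S j).

Lemma exists_argmax_abs (e : nat -> R) (n : nat) :
  exists j, (j <= n)%nat /\ forall k, (k <= n)%nat -> Rabs (e k) <= Rabs (e j).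
Proof.
  induction n as [|n [j [Hj Hm]]].
  - exists 0%nat. split; [lia|]. intros k Hk. replace k with 0%nat by lia. lra.
  - destruct (Rle_dec (Rabs (e (S n))) (Rabs (e j))) as [H|H].
    + exists j. split; [lia|]. intros k Hk.
      destruct (Nat.eq_dec k (S n)) as [->|]; [exact H | apply Hm; lia].
    + exists (S n). split; [lia|]. intros k Hk.
      destruct (Nat.eq_dec k (S n)) as [->|]; [lra|]. specialize (Hm k ltac:(lia)). lra.
Qed.

(* Evaluating the row at an index where |e| is maximal. *)
Lemma tridiag_dominant_bound (n : nat) (l d r w e : nat -> R) (k delta : R) :
  0 <= k ->
  (forall j, (j <= n)%nat -> 0 <= l j /\ 0 <= r j /\ 0 < w j /\ w j <= k * (d j - l j - r j)) ->
  r n = 0 ->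
  (forall j, (j <= n)%nat -> Rabs (tridiag l d r e j) <= delta * w j) ->
  forall j, (j <= n)%nat -> Rabs (e j) <= k * delta.
Proof.
  intros Hk Hc Hrn HR.
  destruct (exists_argmax_abs e n) as [j [Hj Hm]].
  intros i Hi. eapply Rle_trans; [apply Hm; auto|].
  destruct (Hc j Hj) as [Hl [Hr [Hw Hd]]].
  assert (Hgap : 0 < d j - l j - r j) by nra.
  assert (Hpred : l j * Rabs (e (pred j)) <= l j * Rabs (e j))
    by (apply Rmult_le_compat_l; auto; apply Hm; lia).
  assert (Hsucc : r j * Rabs (e (S j)) <= r j * Rabs (e j)).
  { destruct (Nat.eq_dec j n) as [->|]; [rewrite Hrn; lra|].
    apply Rmult_le_compat_l; auto. apply Hm; lia. }
  assert (Hrow : (d j - l j - r j) * Rabs (e j) <= delta * w j).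
  { specialize (HR j Hj). set (T := tridiag l d r e j) in HR.
    assert (Rabs (d j * e j) <= Rabs T + Rabs (l j * e (pred j)) + Rabs (r j * e (S j))).
    { replace (d j * e j) with (T + - (l j * e (pred j)) + - (r j * e (S j)))
        by (unfold T, tridiag; ring).
      pose proof (Rabs_triang (T + - (l j * e (pred j))) (- (r j * e (S j)))).
      pose proof (Rabs_triang T (- (l j * e (pred j)))).
      rewrite !Rabs_Ropp in *. lra. }
    rewrite !Rabs_mult, (Rabs_pos_eq (d j)), (Rabs_pos_eq (l j)), (Rabs_pos_eq (r j)) in H
      by (auto; lra).
    nra. }
  assert (w j * Rabs (e j) <= k * (delta * w j)).
  { pose proof (Rabs_pos (e j)).
    apply Rle_trans with (k * ((d j - l j - r j) * Rabs (e j))); [nra|].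
    apply Rmult_le_compat_l; auto. }
  nra.
Qed.

Section Thomas.
Variables (n : nat) (l d r m : nat -> R).
Hypothesis Hdom : forall j, (j <= n)%nat -> 0 <= l j /\ 0 <= r j /\ l j + r j < d j.
Hypothesis Hl0 : l 0 = 0.
Hypothesis Hrn : r n = 0.

(* Forward elimination: after step j, row j reads e j + fst (sweep j) * e (S j) = snd (sweep j). *)
Fixpoint sweep (j : nat) : R * R :=
  match j with
  | O => (r 0 / d 0, m 0 / d 0)
  | S k => let (ek, gk) := sweep k in
           (r (S k) / (d (S k) - l (S k) * ek), (m (S k) - l (S k) * gk) / (d (S k) - l (S k) * ek))
  end.

Fixpoint back_subst (k : nat) : R :=
  match k with
  | O => snd (sweep n)
  | S k' => snd (sweep (n - S k')) - fst (sweep (n - S k')) * back_subst k'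
  end.

Definition thomas_sol (j : nat) : R := back_subst (n - j).

Lemma sweep_ratio_bound j : (j <= n)%nat -> 0 <= fst (sweep j) <= 1.
Proof.
  induction j as [|j IH]; intros Hj.
  - simpl. destruct (Hdom 0 ltac:(lia)) as [? [? ?]]. split.
    + apply Rdiv_le_0_compat; lra.
    + apply Rcomplements.Rle_div_l; lra.
  - specialize (IH ltac:(lia)). simpl. destruct (sweep j) as [ek gk]. simpl in *.
    destruct (Hdom (S j) Hj) as [? [? ?]].
    assert (0 < d (S j) - l (S j) * ek) by nra. split.
    + apply Rdiv_le_0_compat; lra.
    + apply Rcomplements.Rle_div_l; nra.
Qed.

Lemma thomas_sol_rec j : (j <= n)%nat ->
  thomas_sol j = snd (sweep j) - fst (sweep j) * thomas_sol (S j).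
Proof.
  intros Hj. unfold thomas_sol. destruct (Nat.eq_dec j n) as [->|E].
  - rewrite Nat.sub_diag. simpl.
    assert (fst (sweep n) = 0).
    { destruct n as [|n']; simpl.
      - rewrite Hrn. apply Rdiv_0_l.
      - destruct (sweep n'); simpl. rewrite Hrn. apply Rdiv_0_l. }
    rewrite H. ring.
  - replace (n - j)%nat with (S (n - S j)) by lia. simpl.
    replace (n - S (n - S j))%nat with j by lia. reflexivity.
Qed.

Lemma thomas_sol_spec j : (j <= n)%nat -> tridiag l d r thomas_sol j = m j.
Proof.
  intros Hj. unfold tridiag. destruct j as [|j].
  - simpl. rewrite Hl0, (thomas_sol_rec 0 Hj). simpl.
    destruct (Hdom 0 Hj) as [? [? ?]]. field. lra.
  - simpl pred. rewrite (thomas_sol_rec j ltac:(lia)), (thomas_sol_rec (S j) Hj).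
    pose proof (sweep_ratio_bound j ltac:(lia)).
    simpl. destruct (sweep j) as [ek gk]. simpl in *.
    destruct (Hdom (S j) Hj) as [? [? ?]].
    assert (0 < d (S j) - l (S j) * ek) by nra.
    field. lra.
Qed.
End Thomas.

Lemma tridiag_solvable (n : nat) (l d r m : nat -> R) :
  (forall j, (j <= n)%nat -> 0 <= l j /\ 0 <= r j /\ l j + r j < d j) ->
  l 0%nat = 0 -> r n = 0 ->
  exists c : nat -> R, forall j, (j <= n)%nat -> tridiag l d r c j = m j.
Proof. intros. exists (thomas_sol n l d r m). intros; apply thomas_sol_spec; auto. Qed.

Lemma continuous_Rmax (f g : R -> R) x :
  continuous f x -> continuous g x -> continuous (fun y => Rmax (f y) (g y)) x.
Proof.
  intros Hf Hg.
  apply (continuous_ext (fun y => (f y + g y + Rabs (f y - g y)) / 2)).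
  { intros y. unfold Rmax. destruct (Rle_dec (f y) (g y));
      [rewrite Rabs_left1 by lra | rewrite Rabs_right by lra]; lra. }
  apply (continuous_Rmult _ (fun _ => / 2)); [|apply continuous_const].
  apply (continuous_plus (fun y => f y + g y)); [apply (continuous_plus f g); auto|].
  apply continuous_Rabs_comp. apply (continuous_minus f g); auto.
Qed.

Lemma continuous_Rmin (f g : R -> R) x :
  continuous f x -> continuous g x -> continuous (fun y => Rmin (f y) (g y)) x.
Proof.
  intros Hf Hg.
  apply (continuous_ext (fun y => - Rmax (- f y) (- g y))).
  { intros y. unfold Rmax, Rmin. destruct (Rle_dec (- f y) (- g y)), (Rle_dec (f y) (g y)); lra. }
  apply (continuous_opp (fun y => Rmax (- f y) (- g y))).
  apply continuous_Rmax; [apply (continuous_opp f) | apply (continuous_opp g)]; auto.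
Qed.

Definition clamp (a b x : R) : R := Rmax a (Rmin b x).

Lemma continuous_clamp a b x : continuous (clamp a b) x.
Proof.
  apply (continuous_Rmax (fun _ => a) (fun y => Rmin b y)); [apply continuous_const|].
  apply (continuous_Rmin (fun _ => b) (fun y => y)); [apply continuous_const | apply continuous_id].
Qed.

Lemma clamp_in_seg a b x : a <= b -> seg a b (clamp a b x).
Proof. intros H. unfold seg, clamp. split; [apply Rmax_l | apply Rmax_lub; auto; apply Rmin_l]. Qed.

Lemma clamp_id a b x : a <= x <= b -> clamp a b x = x.
Proof. intros H. unfold clamp. rewrite Rmin_right by lra. rewrite Rmax_right; lra. Qed.

Lemma continuous_comp_clamp (g : R -> R) a b y : a <= b -> continuous_on (seg a b) g ->
  continuous (fun x => g (clamp a b x)) y.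
Proof.
  intros Hab Hg.
  apply (filterlim_comp _ _ _ (clamp a b) g (locally y) (within (seg a b) (locally (clamp a b y)))).
  - intros P HP. unfold filtermap.
    apply (filter_imp (fun x => seg a b (clamp a b x) -> P (clamp a b x))).
    + intros x Hx. apply Hx, clamp_in_seg, Hab.
    + exact (continuous_clamp a b y _ HP).
  - apply Hg, clamp_in_seg, Hab.
Qed.

Lemma ex_RInt_mul_on_seg (g h : R -> R) a b x0 x1 :
  continuous_on (seg a b) g -> (forall x, continuous h x) ->
  a <= x0 -> x0 <= x1 -> x1 <= b -> ex_RInt (fun x => g x * h x) x0 x1.
Proof.
  intros Hg Hh H0 H1 H2.
  apply (ex_RInt_ext (fun x => g (clamp a b x) * h x)).
  { intros x Hx. rewrite Rmin_left, Rmax_right in Hx by lra. rewrite clamp_id; lra. }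
  apply ex_RInt_continuous_R. intros x. apply continuous_Rmult; auto.
  apply continuous_comp_clamp; auto; lra.
Qed.

Lemma sum_f_R0_one (F : nat -> R) i N : (i <= N)%nat ->
  (forall j, (j <= N)%nat -> j <> i -> F j = 0) -> sum_f_R0 F N = F i.
Proof.
  induction N as [|N IH]; intros Hi H.
  - replace i with 0%nat by lia. reflexivity.
  - simpl. destruct (Nat.eq_dec i (S N)) as [->|].
    + rewrite (sum_eq F (fun _ => 0)) by (intros; apply H; lia). rewrite sum_cte. ring.
    + rewrite IH by (lia || (intros; apply H; lia)). rewrite (H (S N)) by lia. ring.
Qed.

Lemma sum_f_R0_two (F : nat -> R) i N : (i < N)%nat ->
  (forall j, (j <= N)%nat -> j <> i -> j <> S i -> F j = 0) -> sum_f_R0 F N = F i + F (S i).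
Proof.
  induction N as [|N IH]; intros Hi H; [lia|]. simpl.
  destruct (Nat.eq_dec i N) as [->|].
  - rewrite (sum_f_R0_one F N N) by (lia || (intros; apply H; lia)). reflexivity.
  - rewrite IH by (lia || (intros; apply H; lia)). rewrite (H (S N)) by lia. ring.
Qed.

Lemma RInt_sum_f_R0 (G : nat -> R -> R) a b N :
  (forall j, (j <= N)%nat -> ex_RInt (G j) a b) ->
  ex_RInt (fun x => sum_f_R0 (fun j => G j x) N) a b /\
  RInt (fun x => sum_f_R0 (fun j => G j x) N) a b = sum_f_R0 (fun j => RInt (G j) a b) N.
Proof.
  induction N as [|N IH]; intros H.
  - split; [exact (H 0%nat (le_n 0)) | reflexivity].
  - destruct IH as [IH1 IH2]; [intros; apply H; lia|]. simpl. split.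
    + apply (ex_RInt_plus (fun x => sum_f_R0 (fun j => G j x) N) (G (S N))); auto.
    + rewrite (RInt_plus (fun x => sum_f_R0 (fun j => G j x) N) (G (S N))); auto.
      rewrite IH2. reflexivity.
Qed.

Lemma continuous_sum_f_R0 (G : nat -> R -> R) N x :
  (forall j, (j <= N)%nat -> continuous (G j) x) ->
  continuous (fun y => sum_f_R0 (fun j => G j y) N) x.
Proof.
  induction N as [|N IH]; intros H; simpl; [apply H; lia|].
  apply (continuous_plus (fun y => sum_f_R0 (fun j => G j y) N) (G (S N))).
  - apply IH. intros; apply H; lia.
  - apply H; lia.
Qed.

Lemma ex_RInt_mul_continuous (F G : R -> R) a b :
  (forall x, continuous F x) -> (forall x, continuous G x) -> ex_RInt (fun x => F x * G x) a b.
Proof. intros HF HG. apply ex_RInt_continuous_R. intros x. apply continuous_Rmult; auto. Qed.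

Lemma RInt_ext_le (f g : R -> R) a b : a <= b ->
  (forall x, a < x < b -> f x = g x) -> RInt f a b = RInt g a b.
Proof.
  intros Hab H. apply RInt_ext. intros x. rewrite Rmin_left, Rmax_right by lra. apply H.
Qed.

Lemma RInt_abs_le_mul (f g : R -> R) a b : a <= b ->
  continuous_on (seg a b) f -> (forall t, seg a b t -> Rabs (f t) <= 1) ->
  (forall x, continuous g x) -> (forall x, a <= x <= b -> 0 <= g x) ->
  Rabs (RInt (fun x => f x * g x) a b) <= RInt g a b.
Proof.
  intros Hab Hf Hf1 Hg Hg0.
  assert (Hfg : ex_RInt (fun x => f x * g x) a b) by (eapply ex_RInt_mul_on_seg; eauto; lra).
  assert (Hg' : ex_RInt g a b) by (apply ex_RInt_continuous_R; auto).
  apply Rabs_le. split.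
  - assert (E : RInt (fun x => (-1) * g x) a b = (-1) * RInt g a b)
      by (apply (RInt_scal g); exact Hg').
    enough (RInt (fun x => (-1) * g x) a b <= RInt (fun x => f x * g x) a b) by lra.
    apply RInt_le; auto; [apply (ex_RInt_scal g); auto|].
    intros x Hx. assert (Rabs (f x) <= 1) by (apply Hf1; unfold seg; lra).
    assert (0 <= g x) by (apply Hg0; lra). apply Rabs_le_between in H. nra.
  - apply RInt_le; auto. intros x Hx. assert (Rabs (f x) <= 1) by (apply Hf1; unfold seg; lra).
    assert (0 <= g x) by (apply Hg0; lra). apply Rabs_le_between in H. nra.
Qed.

Section Mesh.
Variables (lam : R) (n : nat) (tau : nat -> R).
Hypothesis Hlam : 0 < lam.
Hypothesis Hn : (1 <= n)%nat.
Hypothesis Hinc : forall i, (i < n)%nat -> tau i < tau (S i).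
(* Beyond n the mesh is frozen, so [tau n, tau (S n)] is a degenerate subsegment,
   as is [tau (pred 0), tau 0]; integrals over them vanish. *)
Hypothesis Hconst : forall i, (n <= i)%nat -> tau i = tau n.

Lemma tau_mono i k : (i <= k)%nat -> tau i <= tau k.
Proof.
  induction k as [|k IH]; intros H.
  - replace i with 0%nat by lia; lra.
  - destruct (Nat.eq_dec i (S k)) as [->|]; [lra|].
    specialize (IH ltac:(lia)). destruct (Nat.lt_ge_cases k n) as [Hk|Hk].
    + specialize (Hinc k Hk). lra.
    + rewrite (Hconst (S k)) by lia. rewrite (Hconst k) in IH by lia. lra.
Qed.

Lemma tau_in j : tau 0 <= tau j <= tau n.
Proof.
  split; [apply tau_mono; lia|].
  destruct (Nat.le_gt_cases j n); [apply tau_mono; auto | rewrite Hconst by lia; lra].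
Qed.

Lemma tau_0_lt_n : tau 0 < tau n.
Proof. pose proof (Hinc 0 ltac:(lia)). pose proof (tau_mono 1 n ltac:(lia)). lra. Qed.

Lemma exists_subsegment x : tau 0 <= x <= tau n ->
  exists i, (i < n)%nat /\ tau i <= x <= tau (S i).
Proof.
  intros Hx.
  assert (forall k, (1 <= k <= n)%nat -> x <= tau k ->
            exists i, (i < k)%nat /\ tau i <= x <= tau (S i)).
  { induction k as [|k IH]; intros Hk Hxk; [lia|].
    destruct (Nat.eq_dec k 0) as [->|].
    - exists 0%nat. split; [lia | lra].
    - destruct (Rle_dec x (tau k)) as [H|H].
      + destruct (IH ltac:(lia) H) as [i [Hi1 Hi2]]. exists i. split; [lia | auto].
      + exists k. split; [lia | lra]. }
  destruct (H n ltac:(lia) (proj2 Hx)) as [i [Hi1 Hi2]]. eauto.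
Qed.

Definition hat_left (j : nat) (x : R) : R :=
  match j with O => 1 | S k => phi1 lam (tau k) (tau (S k)) x end.
Definition hat_right (j : nat) (x : R) : R :=
  if Nat.ltb j n then phi0 lam (tau j) (tau (S j)) x else 1.
(* The hat spline N_j: it is phi1 on [tau (j-1), tau j], phi0 on [tau j, tau (j+1)] and 0
   elsewhere, because each of phi0, phi1 is >= 1 on the far side of its peak and <= 0 beyond. *)
Definition hat (j : nat) (x : R) : R := Rmax 0 (Rmin (hat_left j x) (hat_right j x)).

Lemma continuous_hat j x : (j <= n)%nat -> continuous (hat j) x.
Proof.
  intros Hj. apply (continuous_Rmax (fun _ => 0)); [apply continuous_const|].
  apply continuous_Rmin.
  - destruct j as [|k]; [apply continuous_const | apply continuous_phi1; auto; apply Hinc; lia].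
  - unfold hat_right. destruct (Nat.ltb_spec j n) as [E|E].
    + apply continuous_phi0; auto.
    + apply continuous_const.
Qed.

Lemma hat_left_ge_1 j x : (j <= n)%nat -> tau j <= x -> 1 <= hat_left j x.
Proof. intros Hj Hx. destruct j as [|k]; simpl; [lra|]. apply phi1_ge_1; auto. Qed.

Lemma hat_right_ge_1 j x : x <= tau j -> 1 <= hat_right j x.
Proof. intros Hx. unfold hat_right. destruct (Nat.ltb_spec j n); [apply phi0_ge_1 | lra]; auto. Qed.

Lemma hat_on_right i x : (i < n)%nat -> tau i <= x <= tau (S i) ->
  hat i x = phi0 lam (tau i) (tau (S i)) x.
Proof.
  intros Hi Hx. unfold hat.
  replace (hat_right i x) with (phi0 lam (tau i) (tau (S i)) x)
    by (unfold hat_right; destruct (Nat.ltb_spec i n); [auto | lia]).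
  pose proof (phi0_nonneg lam _ _ Hlam (Hinc i Hi) x (proj2 Hx)).
  pose proof (phi0_le_1 lam _ _ Hlam (Hinc i Hi) x Hx).
  pose proof (hat_left_ge_1 i x ltac:(lia) (proj1 Hx)).
  unfold Rmax, Rmin. repeat destruct Rle_dec; lra.
Qed.

Lemma hat_on_left i x : (i < n)%nat -> tau i <= x <= tau (S i) ->
  hat (S i) x = phi1 lam (tau i) (tau (S i)) x.
Proof.
  intros Hi Hx. unfold hat. simpl hat_left.
  pose proof (phi1_nonneg lam _ _ Hlam (Hinc i Hi) x (proj1 Hx)).
  pose proof (phi1_le_1 lam _ _ Hlam (Hinc i Hi) x Hx).
  pose proof (hat_right_ge_1 (S i) x (proj2 Hx)).
  unfold Rmax, Rmin. repeat destruct Rle_dec; lra.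
Qed.

Lemma hat_before j x : (1 <= j <= n)%nat -> x <= tau (pred j) -> hat j x = 0.
Proof.
  intros Hj Hx. unfold hat. destruct j as [|k]; [lia|]. simpl in *.
  pose proof (phi1_nonpos lam _ _ Hlam (Hinc k ltac:(lia)) x Hx).
  unfold Rmax, Rmin. repeat destruct Rle_dec; lra.
Qed.

Lemma hat_after j x : (j < n)%nat -> tau (S j) <= x -> hat j x = 0.
Proof.
  intros Hj Hx. unfold hat, hat_right. destruct (Nat.ltb_spec j n); [|lia].
  pose proof (phi0_nonpos lam _ _ Hlam (Hinc j Hj) x Hx).
  unfold Rmax, Rmin. repeat destruct Rle_dec; lra.
Qed.

Lemma hat_off_support i j x : (i < n)%nat -> tau i <= x <= tau (S i) -> (j <= n)%nat ->
  j <> i -> j <> S i -> hat j x = 0.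
Proof.
  intros Hi Hx Hj H1 H2. destruct (Nat.lt_ge_cases j i).
  - apply hat_after; [lia|]. pose proof (tau_mono (S j) i ltac:(lia)). lra.
  - apply hat_before; [lia|]. pose proof (tau_mono (S i) (pred j) ltac:(lia)). lra.
Qed.

Lemma sum_hat_local (c : nat -> R) i x : (i < n)%nat -> tau i <= x <= tau (S i) ->
  sum_f_R0 (fun j => c j * hat j x) n
  = c i * phi0 lam (tau i) (tau (S i)) x + c (S i) * phi1 lam (tau i) (tau (S i)) x.
Proof.
  intros Hi Hx. rewrite (sum_f_R0_two _ i) by
    (auto; intros j Hj H1 H2; rewrite (hat_off_support i j x); auto; ring).
  rewrite hat_on_right, hat_on_left; auto.
Qed.

Definition is_mesh_spline (s : R -> R) : Prop :=
  continuous_on (seg (tau 0) (tau n)) s /\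
  (forall i, (i < n)%nat -> exists c1 c2, forall x, tau i <= x <= tau (S i) ->
     s x = c1 * exp (lam * x) + c2 * exp (- lam * x)).

Lemma mesh_spline_local s i x : is_mesh_spline s -> (i < n)%nat -> tau i <= x <= tau (S i) ->
  s x = s (tau i) * phi0 lam (tau i) (tau (S i)) x + s (tau (S i)) * phi1 lam (tau i) (tau (S i)) x.
Proof.
  intros [_ Hs] Hi Hx. destruct (Hs i Hi) as [c1 [c2 Hc]]. pose proof (Hinc i Hi).
  rewrite (Hc x Hx), (Hc (tau i)), (Hc (tau (S i))) by lra.
  symmetry. apply exp_comb_interp; auto.
Qed.

Lemma mesh_spline_hat_expansion s x : is_mesh_spline s -> tau 0 <= x <= tau n ->
  s x = sum_f_R0 (fun j => s (tau j) * hat j x) n.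
Proof.
  intros Hs Hx. destruct (exists_subsegment x Hx) as [i [Hi Hxi]].
  rewrite (sum_hat_local (fun j => s (tau j)) i) by auto. apply mesh_spline_local; auto.
Qed.

Lemma hat_is_mesh_spline j : (j <= n)%nat -> is_mesh_spline (hat j).
Proof.
  intros Hj. split.
  - apply continuous_on_forall. intros; apply continuous_hat; auto.
  - intros i Hi. destruct (Nat.eq_dec j i) as [->|].
    + eexists; eexists. intros x Hx. rewrite hat_on_right by auto. apply phi0_exp.
    + destruct (Nat.eq_dec j (S i)) as [->|].
      * eexists; eexists. intros x Hx. rewrite hat_on_left by auto. apply phi1_exp.
      * exists 0, 0. intros x Hx. rewrite (hat_off_support i j x); auto. ring.
Qed.

Definition mom_left (g : R -> R) (j : nat) : R :=
  RInt (fun x => g x * phi1 lam (tau (pred j)) (tau j) x) (tau (pred j)) (tau j).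
Definition mom_right (g : R -> R) (j : nat) : R :=
  RInt (fun x => g x * phi0 lam (tau j) (tau (S j)) x) (tau j) (tau (S j)).

Lemma RInt_mul_hat (g : R -> R) j : continuous_on (seg (tau 0) (tau n)) g -> (j <= n)%nat ->
  RInt (fun x => g x * hat j x) (tau 0) (tau n) = mom_left g j + mom_right g j.
Proof.
  intros Hg Hj.
  pose proof (tau_in (pred j)). pose proof (tau_in j). pose proof (tau_in (S j)).
  pose proof (tau_mono (pred j) j ltac:(lia)). pose proof (tau_mono j (S j) ltac:(lia)).
  assert (EX : forall x0 x1, tau 0 <= x0 -> x0 <= x1 -> x1 <= tau n ->
     ex_RInt (fun x => g x * hat j x) x0 x1)
    by (intros; eapply ex_RInt_mul_on_seg; eauto; intros; apply continuous_hat; auto).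
  rewrite <- (RInt_Chasles_R _ (tau 0) (tau (pred j)) (tau n)) by (apply EX; lra).
  rewrite <- (RInt_Chasles_R _ (tau (pred j)) (tau j) (tau n)) by (apply EX; lra).
  rewrite <- (RInt_Chasles_R _ (tau j) (tau (S j)) (tau n)) by (apply EX; lra).
  assert (Hbefore : RInt (fun x => g x * hat j x) (tau 0) (tau (pred j)) = 0).
  { destruct j as [|k]; [apply RInt_point_R|].
    rewrite (RInt_ext_le _ (fun _ => 0)); [rewrite RInt_const_R; eq_in_R; ring | lra |].
    intros x Hx. rewrite hat_before by (simpl in *; lia || lra). ring. }
  assert (Hafter : RInt (fun x => g x * hat j x) (tau (S j)) (tau n) = 0).
  { destruct (Nat.eq_dec j n) as [->|]; [rewrite Hconst by lia; apply RInt_point_R|].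
    rewrite (RInt_ext_le _ (fun _ => 0)); [rewrite RInt_const_R; eq_in_R; ring | lra |].
    intros x Hx. rewrite hat_after by (lia || lra). ring. }
  assert (Hleft : RInt (fun x => g x * hat j x) (tau (pred j)) (tau j) = mom_left g j).
  { destruct j as [|k]; [unfold mom_left; simpl; rewrite !RInt_point_R; reflexivity|].
    apply RInt_ext_le; auto. intros x Hx. simpl in *. rewrite hat_on_left by (lia || lra). ring. }
  assert (Hright : RInt (fun x => g x * hat j x) (tau j) (tau (S j)) = mom_right g j).
  { destruct (Nat.eq_dec j n) as [->|].
    - unfold mom_right. rewrite (Hconst (S n)) by lia. rewrite !RInt_point_R. reflexivity.
    - apply RInt_ext_le; auto. intros x Hx. rewrite hat_on_right by (lia || lra). ring. }
  rewrite Hbefore, Hafter, Hleft, Hright. eq_in_R. ring.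
Qed.

Definition gram_sub (j : nat) : R := gram_off lam (tau (pred j)) (tau j).
Definition gram_mid (j : nat) : R :=
  gram_diag lam (tau (pred j)) (tau j) + gram_diag lam (tau j) (tau (S j)).
Definition gram_sup (j : nat) : R := gram_off lam (tau j) (tau (S j)).
Definition hat_mass (j : nat) : R := mass lam (tau (pred j)) (tau j) + mass lam (tau j) (tau (S j)).

Lemma local_gram_dominant x0 x1 : x0 <= x1 ->
  0 <= gram_off lam x0 x1 /\ 0 <= mass lam x0 x1 /\
  mass lam x0 x1 <= 3 * (gram_diag lam x0 x1 - gram_off lam x0 x1).
Proof.
  intros [Hx | <-].
  - pose proof (gram_off_nonneg lam x0 x1 Hlam Hx). pose proof (mass_pos lam x0 x1 Hlam Hx).
    pose proof (mass_div3_le_gram_gap lam x0 x1 Hlam Hx). repeat split; lra.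
  - unfold gram_off, mass, gram_diag. rewrite !RInt_point_R. repeat split; lra.
Qed.

Lemma gram_row_dominant j : (j <= n)%nat ->
  0 <= gram_sub j /\ 0 <= gram_sup j /\ 0 < hat_mass j /\
  hat_mass j <= 3 * (gram_mid j - gram_sub j - gram_sup j).
Proof.
  intros Hj.
  destruct (local_gram_dominant _ _ (tau_mono (pred j) j ltac:(lia))) as [L1 [L2 L3]].
  destruct (local_gram_dominant _ _ (tau_mono j (S j) ltac:(lia))) as [R1 [R2 R3]].
  assert (0 < mass lam (tau (pred j)) (tau j) \/ 0 < mass lam (tau j) (tau (S j))).
  { destruct j as [|k]; [right | left]; apply mass_pos; auto; apply Hinc; lia. }
  unfold gram_sub, gram_sup, gram_mid, hat_mass. repeat split; lra.
Qed.

Lemma gram_sub_0 : gram_sub 0 = 0.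
Proof. apply RInt_point_R. Qed.

Lemma gram_sup_n : gram_sup n = 0.
Proof. unfold gram_sup, gram_off. rewrite (Hconst (S n)) by lia. apply RInt_point_R. Qed.

Lemma mom_left_spline s j : is_mesh_spline s -> (j <= n)%nat ->
  mom_left s j = gram_sub j * s (tau (pred j)) + gram_diag lam (tau (pred j)) (tau j) * s (tau j).
Proof.
  intros Hs Hj. unfold mom_left, gram_sub, gram_off, gram_diag. destruct j as [|k].
  - simpl. rewrite !RInt_point_R. ring.
  - simpl. pose proof (Hinc k ltac:(lia)).
    rewrite (RInt_ext_le _ (fun x =>
               s (tau k) * (phi0 lam (tau k) (tau (S k)) x * phi1 lam (tau k) (tau (S k)) x)
               + s (tau (S k)) * (phi1 lam (tau k) (tau (S k)) x * phi1 lam (tau k) (tau (S k)) x))).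
    + rewrite RInt_lin_comb; [ring | |];
        apply ex_RInt_mul_continuous; auto using continuous_phi0, continuous_phi1.
    + lra.
    + intros x Hx. rewrite (mesh_spline_local s k x) by (auto; lia || lra). ring.
Qed.

Lemma mom_right_spline s j : is_mesh_spline s -> (j <= n)%nat ->
  mom_right s j = gram_diag lam (tau j) (tau (S j)) * s (tau j) + gram_sup j * s (tau (S j)).
Proof.
  intros Hs Hj. unfold mom_right, gram_sup, gram_off. destruct (Nat.eq_dec j n) as [->|].
  - unfold gram_diag. rewrite (Hconst (S n)) by lia. rewrite !RInt_point_R. ring.
  - pose proof (Hinc j ltac:(lia)). rewrite <- RInt_phi0_sq by auto.
    rewrite (RInt_ext_le _ (fun x =>
               s (tau j) * (phi0 lam (tau j) (tau (S j)) x * phi0 lam (tau j) (tau (S j)) x)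
               + s (tau (S j)) * (phi0 lam (tau j) (tau (S j)) x * phi1 lam (tau j) (tau (S j)) x))).
    + rewrite RInt_lin_comb; [ring | |];
        apply ex_RInt_mul_continuous; auto using continuous_phi0, continuous_phi1.
    + lra.
    + intros x Hx. rewrite (mesh_spline_local s j x) by (auto; lia || lra). ring.
Qed.

Lemma RInt_spline_mul_hat s j : is_mesh_spline s -> (j <= n)%nat ->
  RInt (fun x => s x * hat j x) (tau 0) (tau n)
  = tridiag gram_sub gram_mid gram_sup (fun k => s (tau k)) j.
Proof.
  intros Hs Hj. rewrite RInt_mul_hat by (auto; apply Hs).
  rewrite mom_left_spline, mom_right_spline by auto. unfold tridiag, gram_mid. eq_in_R. ring.
Qed.

Lemma mom_left_bound f j : continuous_on (seg (tau 0) (tau n)) f ->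
  (forall t, seg (tau 0) (tau n) t -> Rabs (f t) <= 1) -> (j <= n)%nat ->
  Rabs (mom_left f j) <= mass lam (tau (pred j)) (tau j).
Proof.
  intros Hc Hf Hj. unfold mom_left, mass. destruct j as [|k].
  - simpl. rewrite !RInt_point_R, Rabs_R0. lra.
  - simpl. pose proof (Hinc k ltac:(lia)). pose proof (tau_in k). pose proof (tau_in (S k)).
    apply RInt_abs_le_mul;
      [lra | | | apply continuous_phi1; auto | intros x Hx; apply phi1_nonneg; auto; lra].
    + apply (continuous_on_subset (seg (tau 0) (tau n))); auto. unfold seg; intros; lra.
    + intros t Ht. apply Hf. unfold seg in *. lra.
Qed.

Lemma mom_right_bound f j : continuous_on (seg (tau 0) (tau n)) f ->
  (forall t, seg (tau 0) (tau n) t -> Rabs (f t) <= 1) -> (j <= n)%nat ->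
  Rabs (mom_right f j) <= mass lam (tau j) (tau (S j)).
Proof.
  intros Hc Hf Hj. unfold mom_right. destruct (Nat.eq_dec j n) as [->|].
  - unfold mass. rewrite (Hconst (S n)) by lia. rewrite !RInt_point_R, Rabs_R0. lra.
  - pose proof (Hinc j ltac:(lia)). pose proof (tau_in j). pose proof (tau_in (S j)).
    rewrite <- RInt_phi0 by auto.
    apply RInt_abs_le_mul;
      [lra | | | apply continuous_phi0; auto | intros x Hx; apply phi0_nonneg; auto; lra].
    + apply (continuous_on_subset (seg (tau 0) (tau n))); auto. unfold seg; intros; lra.
    + intros t Ht. apply Hf. unfold seg in *. lra.
Qed.

Lemma normal_eq_rhs_bound f j : continuous_on (seg (tau 0) (tau n)) f ->
  (forall t, seg (tau 0) (tau n) t -> Rabs (f t) <= 1) -> (j <= n)%nat ->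
  Rabs (RInt (fun x => f x * hat j x) (tau 0) (tau n)) <= 1 * hat_mass j.
Proof.
  intros Hc Hf Hj. rewrite RInt_mul_hat by auto.
  pose proof (mom_left_bound f j Hc Hf Hj). pose proof (mom_right_bound f j Hc Hf Hj).
  pose proof (Rabs_triang (mom_left f j) (mom_right f j)). unfold hat_mass. lra.
Qed.

(* The values p (tau j) solve the normal equations against the hats, a diagonally dominant
   tridiagonal system; between nodes p mixes them with weights phi0, phi1 >= 0 of sum <= 1. *)
Theorem orth_proj_le_3 f p : continuous_on (seg (tau 0) (tau n)) f ->
  (forall t, seg (tau 0) (tau n) t -> Rabs (f t) <= 1) -> is_mesh_spline p ->
  (forall s, is_mesh_spline s ->
     RInt (fun x => f x * s x) (tau 0) (tau n) = RInt (fun x => p x * s x) (tau 0) (tau n)) ->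
  forall x, seg (tau 0) (tau n) x -> Rabs (p x) <= 3.
Proof.
  intros Hfc Hf Hp Horth x Hx.
  assert (Hnodes : forall j, (j <= n)%nat -> Rabs (p (tau j)) <= 3 * 1).
  { apply (tridiag_dominant_bound n gram_sub gram_mid gram_sup hat_mass);
      [lra | apply gram_row_dominant | apply gram_sup_n |].
    intros j Hj. rewrite <- RInt_spline_mul_hat, <- Horth by (auto; apply hat_is_mesh_spline; auto).
    apply normal_eq_rhs_bound; auto. }
  destruct (exists_subsegment x Hx) as [i [Hi Hxi]].
  rewrite (mesh_spline_local p i x) by auto.
  pose proof (Hnodes i ltac:(lia)). pose proof (Hnodes (S i) ltac:(lia)). pose proof (Hinc i Hi).
  pose proof (phi0_nonneg lam _ _ Hlam H1 x (proj2 Hxi)).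
  pose proof (phi1_nonneg lam _ _ Hlam H1 x (proj1 Hxi)).
  pose proof (phi0_add_phi1_le_1 lam _ _ Hlam H1 x Hxi).
  eapply Rle_trans; [apply Rabs_triang|].
  rewrite !Rabs_mult, !(Rabs_pos_eq (phi0 _ _ _ x)), (Rabs_pos_eq (phi1 _ _ _ x)) by auto.
  nra.
Qed.

Lemma RInt_mul_spline_expand g s : continuous_on (seg (tau 0) (tau n)) g -> is_mesh_spline s ->
  RInt (fun x => g x * s x) (tau 0) (tau n) =
  sum_f_R0 (fun j => s (tau j) * RInt (fun x => g x * hat j x) (tau 0) (tau n)) n.
Proof.
  intros Hg Hs. pose proof tau_0_lt_n.
  assert (Hex : forall j, (j <= n)%nat -> ex_RInt (fun x => g x * hat j x) (tau 0) (tau n))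
    by (intros; eapply ex_RInt_mul_on_seg; eauto; try lra; intros; apply continuous_hat; auto).
  rewrite (RInt_ext_le _ (fun x => sum_f_R0 (fun j => s (tau j) * (g x * hat j x)) n)); [| lra |].
  - destruct (RInt_sum_f_R0 (fun j x => s (tau j) * (g x * hat j x)) (tau 0) (tau n) n) as [_ E].
    { intros j Hj. apply (ex_RInt_scal (fun x => g x * hat j x)), Hex, Hj. }
    rewrite E. apply sum_eq. intros j Hj. apply (RInt_scal (fun x => g x * hat j x)), Hex, Hj.
  - intros x Hx. rewrite (mesh_spline_hat_expansion s x Hs) by lra.
    rewrite scal_sum. apply sum_eq. intros; ring.
Qed.

Definition spline_of_coefs (c : nat -> R) (x : R) : R := sum_f_R0 (fun j => c j * hat j x) n.

Lemma spline_of_coefs_node c k : (k <= n)%nat -> spline_of_coefs c (tau k) = c k.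
Proof.
  intros Hk. unfold spline_of_coefs. destruct (Nat.eq_dec k n) as [->|].
  - pose proof (Hinc (pred n) ltac:(lia)) as H. replace (S (pred n)) with n in H by lia.
    rewrite (sum_hat_local c (pred n)) by (lia || (replace (S (pred n)) with n by lia; lra)).
    replace (S (pred n)) with n by lia. rewrite phi0_right, phi1_right by auto. ring.
  - pose proof (Hinc k ltac:(lia)).
    rewrite (sum_hat_local c k) by (lia || lra). rewrite phi0_left, phi1_left by auto. ring.
Qed.

Lemma spline_of_coefs_is_mesh_spline c : is_mesh_spline (spline_of_coefs c).
Proof.
  split.
  - apply continuous_on_forall. intros x _. apply (continuous_sum_f_R0 (fun j y => c j * hat j y)).
    intros j Hj.
    apply (continuous_Rmult (fun _ => c j)); [apply continuous_const | apply continuous_hat; auto].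
  - intros i Hi. pose proof (Hinc i Hi).
    set (S0 := sinh (lam * (tau (S i) - tau i))).
    exists (c i * (- exp (- (lam * tau (S i))) / 2 / S0) + c (S i) * (exp (- (lam * tau i)) / 2 / S0)).
    exists (c i * (exp (lam * tau (S i)) / 2 / S0) + c (S i) * (- exp (lam * tau i) / 2 / S0)).
    intros x Hx. unfold spline_of_coefs. rewrite (sum_hat_local c i x) by auto.
    rewrite phi0_exp, phi1_exp. fold S0. ring.
Qed.

Theorem exists_orth_proj f : continuous_on (seg (tau 0) (tau n)) f ->
  exists c : nat -> R,
    (forall j, (j <= n)%nat -> tridiag gram_sub gram_mid gram_sup c j = mom_left f j + mom_right f j) /\
    (forall s, is_mesh_spline s ->
       RInt (fun x => f x * s x) (tau 0) (tau n)
       = RInt (fun x => spline_of_coefs c x * s x) (tau 0) (tau n)).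
Proof.
  intros Hf.
  destruct (tridiag_solvable n gram_sub gram_mid gram_sup (fun j => mom_left f j + mom_right f j))
    as [c Hc].
  { intros j Hj. destruct (gram_row_dominant j Hj) as [? [? [? ?]]]. repeat split; auto; lra. }
  { apply gram_sub_0. } { apply gram_sup_n. }
  exists c. split; auto. intros s Hs.
  pose proof (spline_of_coefs_is_mesh_spline c) as Hp.
  rewrite !RInt_mul_spline_expand by (auto; apply Hp).
  apply sum_eq. intros j Hj. f_equal.
  rewrite (RInt_spline_mul_hat (spline_of_coefs c)), RInt_mul_hat, <- Hc by auto.
  unfold tridiag. rewrite !spline_of_coefs_node by lia. eq_in_R. destruct (Nat.eq_dec j n) as [->|].
  - rewrite gram_sup_n. ring.
  - rewrite spline_of_coefs_node by lia. ring.
Qed.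

(* Solves the left halves of the normal equations, row by row from the left. *)
Fixpoint approx_coef (f : R -> R) (k : nat) : R :=
  match k with
  | O => 0
  | S k' => (mom_left f (S k') - gram_off lam (tau k') (tau (S k')) * approx_coef f k')
            / gram_diag lam (tau k') (tau (S k'))
  end.

Section LowerBound.
Variables (q theta : R) (f : R -> R) (beta : nat -> R).
Hypothesis Hq : 0 < q <= 1/2.
Hypothesis Htheta : 0 <= theta.
Hypothesis Hn3 : (3 <= n)%nat.
Hypothesis Hfc : continuous_on (seg (tau 0) (tau n)) f.
Hypothesis Hf1 : forall t, seg (tau 0) (tau n) t -> Rabs (f t) <= 1.
Hypothesis Hmom_left_1 : mom_left f 1 = 0.
Hypothesis Hmom_left_2 : mom_left f 2 = 0.
Hypothesis Hmom_right_0 : mom_right f 0 = 0.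
Hypothesis Hmom_right_1 : mom_right f 1 = 0.
Hypothesis Hbeta : forall i, (2 <= i < n)%nat ->
  mom_left f (S i) = (-1) ^ i * beta i /\ 0 <= beta i /\
  mass lam (tau i) (tau (S i)) - theta * (tau (S i) - tau i) <= beta i <= mass lam (tau i) (tau (S i)).
Hypothesis Hmu1 : forall i, (1 <= i < n)%nat -> lam * (tau (S i) - tau i) <= 1.
Hypothesis Hmu2 : forall i, (2 <= i < n)%nat -> lam * (tau (S i) - tau i) <= q.
Hypothesis Hratio : forall j, (2 <= j < n)%nat -> tau (S j) - tau j <= 2 * q * (tau j - tau (pred j)).

Let kappa := 9 * q + 12 * theta.

Lemma gram_diag_mesh_pos i : (i < n)%nat -> 0 < gram_diag lam (tau i) (tau (S i)).
Proof.
  intros Hi. pose proof (Hinc i Hi). pose proof (mass_div3_le_gram_gap lam _ _ Hlam H).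
  pose proof (mass_pos lam _ _ Hlam H). pose proof (gram_off_nonneg lam _ _ Hlam H). lra.
Qed.

Lemma approx_coef_1 : approx_coef f 1 = 0.
Proof. simpl. rewrite Hmom_left_1. unfold Rdiv. ring. Qed.

Lemma approx_coef_2 : approx_coef f 2 = 0.
Proof.
  change (approx_coef f 2) with ((mom_left f 2 - gram_off lam (tau 1) (tau 2) * approx_coef f 1)
    / gram_diag lam (tau 1) (tau 2)).
  rewrite approx_coef_1, Hmom_left_2. unfold Rdiv. ring.
Qed.

Lemma approx_coef_alternating k : (2 <= k <= n)%nat ->
  exists g, approx_coef f k = (-1) ^ (k - 1) * g /\ 0 <= g <= 3 /\
            (3 - kappa) - g <= 3 * (11/12) ^ (k - 2).
Proof.
  induction k as [|k IH]; intros Hk; [lia|].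
  destruct (Nat.eq_dec k 1) as [->|].
  - exists 0. rewrite approx_coef_2. unfold kappa. simpl. repeat split; lra.
  - destruct (IH ltac:(lia)) as [g [Hg1 [Hg2 Hg3]]].
    destruct (Hbeta k ltac:(lia)) as [Hb1 [Hb2 Hb3]].
    destruct (approx_step lam (tau k) (tau (S k)) Hlam (Hinc k ltac:(lia)) q theta (beta k) g
                Hq Htheta (Hmu2 k ltac:(lia)) Hb3 Hb2 Hg2) as [G1 G2].
    eexists. split; [|split; [exact G1|]].
    + change (approx_coef f (S k)) with ((mom_left f (S k)
        - gram_off lam (tau k) (tau (S k)) * approx_coef f k) / gram_diag lam (tau k) (tau (S k))).
      rewrite Hb1, Hg1. replace (S k - 1)%nat with (S (k - 1)) by lia.
      replace k with (S (k - 1)) at 1 by lia. simpl.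
      pose proof (gram_diag_mesh_pos k ltac:(lia)). field. lra.
    + fold kappa in G2. replace (S k - 2)%nat with (S (k - 2)) by lia. simpl.
      assert (Rmax 0 (3 - kappa - g) <= 3 * (11/12) ^ (k - 2))
        by (apply Rmax_lub; [apply Rmult_le_pos; [lra | apply pow_le; lra] | lra]).
      lra.
Qed.

Lemma approx_coef_bound k : (k <= n)%nat -> Rabs (approx_coef f k) <= 3.
Proof.
  intros Hk. destruct (Nat.lt_ge_cases k 2).
  - destruct k as [|[|]]; [simpl | rewrite approx_coef_1 | lia]; rewrite Rabs_R0; lra.
  - destruct (approx_coef_alternating k ltac:(lia)) as [g [-> [Hg _]]].
    rewrite Rabs_mult, pow_1_abs, (Rabs_pos_eq g); lra.
Qed.

Lemma approx_residual_eq j : (j < n)%nat ->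
  tridiag gram_sub gram_mid gram_sup (approx_coef f) (S j) - (mom_left f (S j) + mom_right f (S j))
  = gram_diag lam (tau (S j)) (tau (S (S j))) * approx_coef f (S j)
    + gram_sup (S j) * approx_coef f (S (S j)) - mom_right f (S j).
Proof.
  intros Hj. pose proof (gram_diag_mesh_pos j Hj).
  unfold tridiag, gram_mid, gram_sub. simpl pred.
  change (approx_coef f (S j)) with ((mom_left f (S j)
    - gram_off lam (tau j) (tau (S j)) * approx_coef f j) / gram_diag lam (tau j) (tau (S j))).
  field. lra.
Qed.

Lemma approx_residual_interior_bound i : (i < n)%nat ->
  Rabs (gram_diag lam (tau i) (tau (S i)) * approx_coef f i + gram_sup i * approx_coef f (S i)
        - mom_right f i) <= 7 * (tau (S i) - tau i).
Proof.
  intros Hi. pose proof (Hinc i Hi) as Hx.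
  pose proof (gram_diag_le_len lam _ _ Hlam Hx). pose proof (gram_off_le_len lam _ _ Hlam Hx).
  pose proof (mass_le_len lam _ _ Hlam Hx). pose proof (gram_diag_mesh_pos i Hi).
  pose proof (gram_off_nonneg lam _ _ Hlam Hx).
  pose proof (mom_right_bound f i Hfc Hf1 ltac:(lia)).
  pose proof (approx_coef_bound i ltac:(lia)). pose proof (approx_coef_bound (S i) ltac:(lia)).
  unfold gram_sup in *.
  set (D := gram_diag lam (tau i) (tau (S i))) in *. set (B := gram_off lam (tau i) (tau (S i))) in *.
  pose proof (Rabs_triang (D * approx_coef f i + B * approx_coef f (S i)) (- mom_right f i)).
  pose proof (Rabs_triang (D * approx_coef f i) (B * approx_coef f (S i))).
  rewrite Rabs_Ropp, !Rabs_mult, (Rabs_pos_eq D), (Rabs_pos_eq B) in * by lra.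
  assert (D * Rabs (approx_coef f i) <= (tau (S i) - tau i) * 3)
    by (apply Rmult_le_compat; auto using Rabs_pos; lra).
  assert (B * Rabs (approx_coef f (S i)) <= (tau (S i) - tau i) * 3)
    by (apply Rmult_le_compat; auto using Rabs_pos).
  unfold Rminus at 1. lra.
Qed.

Lemma mesh_len_le_hat_mass i : (2 <= i < n)%nat ->
  7 * (tau (S i) - tau i) <= 56 * q * hat_mass i.
Proof.
  intros Hi. destruct i as [|k]; [lia|]. pose proof (Hinc k ltac:(lia)) as Hx.
  pose proof (len_div4_le_mass lam _ _ Hlam Hx (Hmu1 k ltac:(lia))).
  pose proof (local_gram_dominant _ _ (tau_mono (S k) (S (S k)) ltac:(lia))) as [_ [HR _]].
  pose proof (Hratio (S k) Hi). unfold hat_mass. simpl pred in *.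
  assert (2 * q * (tau (S k) - tau k) <= 2 * q * (4 * mass lam (tau k) (tau (S k))))
    by (apply Rmult_le_compat_l; lra).
  nra.
Qed.

Lemma approx_residual j : (j <= n)%nat ->
  Rabs (tridiag gram_sub gram_mid gram_sup (approx_coef f) j - (mom_left f j + mom_right f j))
  <= 56 * q * hat_mass j.
Proof.
  intros Hj. destruct (gram_row_dominant j Hj) as [_ [_ [Hw _]]].
  assert (H0 : 0 <= 56 * q * hat_mass j) by (apply Rmult_le_pos; lra).
  destruct j as [|j].
  - unfold tridiag. rewrite gram_sub_0, Hmom_right_0, approx_coef_1.
    unfold mom_left. simpl. rewrite RInt_point_R.
    match goal with |- Rabs ?e <= _ => replace e with 0 by ring end. rewrite Rabs_R0; lra.
  - rewrite approx_residual_eq by lia.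
    destruct (Nat.eq_dec j 0) as [->|].
    + rewrite approx_coef_1, approx_coef_2, Hmom_right_1.
      match goal with |- Rabs ?e <= _ => replace e with 0 by ring end. rewrite Rabs_R0; lra.
    + destruct (Nat.eq_dec (S j) n) as [En|En].
      * unfold mom_right, gram_sup, gram_off, gram_diag.
        rewrite (Hconst (S (S j))), <- En by lia. rewrite !RInt_point_R.
        match goal with |- Rabs ?e <= _ => replace e with 0 by ring end. rewrite Rabs_R0; lra.
      * apply Rle_trans with (7 * (tau (S (S j)) - tau (S j))).
        -- apply approx_residual_interior_bound; lia.
        -- apply mesh_len_le_hat_mass; lia.
Qed.

(* The exact coefficients differ from approx_coef by a solution of the Gram system with
   right-hand side of size O(q) hat_mass, hence by O(q). *)
Theorem orth_proj_last_coef_lower : exists c : nat -> R,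
  (forall s, is_mesh_spline s ->
     RInt (fun x => f x * s x) (tau 0) (tau n)
     = RInt (fun x => spline_of_coefs c x * s x) (tau 0) (tau n)) /\
  3 - kappa - 3 * (11/12) ^ (n - 2) - 168 * q <= Rabs (c n).
Proof.
  destruct (exists_orth_proj f Hfc) as [c [Hrow Horth]].
  exists c. split; [exact Horth|].
  assert (Hdiff : Rabs (c n - approx_coef f n) <= 3 * (56 * q)).
  { apply (tridiag_dominant_bound n gram_sub gram_mid gram_sup hat_mass
             (fun k => c k - approx_coef f k));
      [lra | apply gram_row_dominant | apply gram_sup_n | | lia].
    intros j Hj. rewrite <- Rabs_Ropp.
    replace (- tridiag gram_sub gram_mid gram_sup (fun k => c k - approx_coef f k) j)
      with (tridiag gram_sub gram_mid gram_sup (approx_coef f) j - (mom_left f j + mom_right f j))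
      by (rewrite <- (Hrow j Hj); unfold tridiag; ring).
    apply approx_residual; auto. }
  destruct (approx_coef_alternating n ltac:(lia)) as [g [Hg1 [Hg2 Hg3]]].
  assert (Rabs (approx_coef f n) = g) by (rewrite Hg1, Rabs_mult, pow_1_abs, Rabs_pos_eq; lra).
  pose proof (Rabs_triang_inv (approx_coef f n) (approx_coef f n - c n)).
  replace (approx_coef f n - (approx_coef f n - c n)) with (c n) in H0 by ring.
  rewrite <- Rabs_Ropp in Hdiff.
  replace (- (c n - approx_coef f n)) with (approx_coef f n - c n) in Hdiff by ring.
  lra.
Qed.
End LowerBound.
End Mesh.

Lemma is_Lspline_iff_mesh (lam : R) (n : nat) (tau : nat -> R) (D : list R) (s : R -> R) :
  length D = S n -> (forall i, (i <= n)%nat -> nth i D 0 = tau i) ->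
  (is_Lspline (tau O) (tau n) lam D s <-> is_mesh_spline lam n tau s).
Proof.
  intros HL HD. unfold is_Lspline, is_mesh_spline.
  split; intros [H1 H2]; split; auto; intros i Hi; destruct (H2 i ltac:(lia)) as [c1 [c2 Hc]];
    exists c1, c2; intros x Hx; apply Hc; rewrite !HD in * by lia; auto.
Qed.

Definition partition_node (D : list R) (i : nat) : R := nth (Nat.min i (pred (length D))) D 0.

Lemma partition_node_props a b D : is_partition a b D ->
  (1 <= pred (length D))%nat /\
  (forall i, (i < pred (length D))%nat -> partition_node D i < partition_node D (S i)) /\
  (forall i, (pred (length D) <= i)%nat -> partition_node D i = partition_node D (pred (length D))) /\
  partition_node D O = a /\ partition_node D (pred (length D)) = b /\
  (forall i, (i <= pred (length D))%nat -> nth i D 0 = partition_node D i).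
Proof.
  intros [HL [H0 [Hn Hinc]]]. unfold partition_node. repeat split.
  - lia.
  - intros i Hi. rewrite !Nat.min_l by lia. apply Hinc. lia.
  - intros i Hi. rewrite Nat.min_r, Nat.min_id by lia. reflexivity.
  - rewrite Nat.min_l by lia. auto.
  - rewrite Nat.min_id. auto.
  - intros i Hi. rewrite Nat.min_l by lia. reflexivity.
Qed.

Lemma proj_opnorm_le_3 a b lam D : 0 < lam -> is_partition a b D ->
  Rbar_le (proj_opnorm a b lam D) 3.
Proof.
  intros Hlam HP.
  destruct (partition_node_props a b D HP) as [Hn [Hinc [Hconst [Ha [Hb HD]]]]].
  set (n := pred (length D)) in *. set (tau := partition_node D) in *.
  assert (HL : length D = S n) by (unfold n; destruct HP; lia).
  apply (proj2 (Lub_Rbar_correct (proj_values a b lam D))).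
  intros y [f [p [x [Hfc [Hf [[Hp Horth] [Hx ->]]]]]]]. simpl.
  rewrite <- Ha, <- Hb in *.
  apply (orth_proj_le_3 lam n tau Hlam Hn Hinc Hconst f p); auto.
  - apply (is_Lspline_iff_mesh lam n tau D p HL HD), Hp.
  - intros s Hs. apply Horth, (is_Lspline_iff_mesh lam n tau D s HL HD), Hs.
Qed.

Definition bump (N : nat) (y : R) : R := 1 - (2 * y - 1) ^ (2 * N).

Lemma bump_range N y : 0 <= y <= 1 -> 0 <= bump N y <= 1.
Proof.
  intros [Hy0 Hy1]. unfold bump. rewrite pow_mult.
  assert (0 <= (2 * y - 1) ^ 2 <= 1) by (split; [apply pow2_ge_0 | nra]).
  assert (0 <= ((2 * y - 1) ^ 2) ^ N) by (apply pow_le; lra).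
  assert (((2 * y - 1) ^ 2) ^ N <= 1 ^ N) by (apply pow_incr; lra).
  rewrite pow1 in *. lra.
Qed.

Lemma bump_0 N : bump N 0 = 0.
Proof. unfold bump. rewrite pow_mult. replace ((2 * 0 - 1) ^ 2) with 1 by ring. rewrite pow1. ring. Qed.

Lemma bump_1 N : bump N 1 = 0.
Proof. unfold bump. rewrite pow_mult. replace ((2 * 1 - 1) ^ 2) with 1 by ring. rewrite pow1. ring. Qed.

Lemma RInt_one_sub_bump N x0 x1 : x0 < x1 ->
  RInt (fun x => 1 - bump N ((x - x0) / (x1 - x0))) x0 x1 = (x1 - x0) / (2 * INR N + 1).
Proof.
  intros Hx. assert (HN : 0 < 2 * INR N + 1) by (pose proof (pos_INR N); lra).
  unfold bump.
  rewrite (RInt_ext_le _ (fun x => (2 * ((x - x0) / (x1 - x0)) - 1) ^ (2 * N)))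
    by (lra || (intros; ring)).
  rewrite (RInt_antiderivative
    (fun x => (x1 - x0) / (2 * (2 * INR N + 1)) * (2 * ((x - x0) / (x1 - x0)) - 1) ^ S (2 * N))).
  - eq_in_R. replace (2 * ((x1 - x0) / (x1 - x0)) - 1) with 1 by (field; lra).
    replace (2 * ((x0 - x0) / (x1 - x0)) - 1) with (-1) by (field; lra).
    rewrite pow1, <- tech_pow_Rmult, pow_mult. replace ((-1) ^ 2) with 1 by ring. rewrite pow1.
    field. lra.
  - intros x. auto_derive; [lra|]. eq_in_R.
    change (match (N + (N + 0))%nat with 0%nat => 1 | S _ => INR (N + (N + 0)) + 1 end)
      with (INR (S (N + (N + 0)))).
    rewrite S_INR, !plus_INR. simpl INR. replace (N + (N + 0))%nat with (2 * N)%nat by lia.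
    unfold Rminus, Rdiv. field. lra.
  - intros x. apply ex_derive_continuous_R. auto_derive. lra.
Qed.

Lemma pow_le_1 x k : 0 <= x <= 1 -> x ^ k <= 1.
Proof. intros Hx. induction k as [|k IH]; simpl; [lra|]. pose proof (pow_le x k (proj1 Hx)). nra. Qed.

Section GeometricMesh.
Variables (a b lam q : R) (N n : nat).
Hypothesis Hab : a < b.
Hypothesis Hlam : 0 < lam.
Hypothesis Hq : 0 < q <= 1/2.
Hypothesis Hn3 : (3 <= n)%nat.

Definition geom_scale : R := Rmin ((b - a) / 2) (/ lam).

Definition geom_mesh (i : nat) : R :=
  if Nat.eqb i 0 then a else if Nat.ltb i n then b - geom_scale * q ^ (i - 1) else b.

Lemma geom_scale_pos : 0 < geom_scale.
Proof. apply Rmin_glb_lt; [lra | apply Rinv_0_lt_compat; auto]. Qed.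

Lemma lam_geom_scale_le_1 : lam * geom_scale <= 1.
Proof.
  pose proof (Rmin_r ((b - a) / 2) (/ lam)) as H. unfold geom_scale.
  apply (Rmult_le_compat_l lam) in H; [|lra]. rewrite Rinv_r in H; lra.
Qed.

Lemma geom_mesh_mid i : (1 <= i < n)%nat -> geom_mesh i = b - geom_scale * q ^ (i - 1).
Proof.
  intros H. unfold geom_mesh. destruct (Nat.eqb_spec i 0); [lia|].
  destruct (Nat.ltb_spec i n); [auto | lia].
Qed.

Lemma geom_mesh_end i : (n <= i)%nat -> geom_mesh i = b.
Proof.
  intros H. unfold geom_mesh. destruct (Nat.eqb_spec i 0); [lia|].
  destruct (Nat.ltb_spec i n); [lia | auto].
Qed.

Lemma geom_gap_le i : (1 <= i < n)%nat ->
  0 < geom_mesh (S i) - geom_mesh i <= geom_scale * q ^ (i - 1).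
Proof.
  intros H. pose proof geom_scale_pos. pose proof (pow_lt q (i - 1) ltac:(lra)).
  assert (0 < geom_scale * q ^ (i - 1)) by (apply Rmult_lt_0_compat; lra).
  rewrite (geom_mesh_mid i) by lia. destruct (Nat.eq_dec (S i) n) as [E|E].
  - rewrite geom_mesh_end by lia. lra.
  - rewrite geom_mesh_mid by lia. replace (S i - 1)%nat with (S (i - 1)) by lia. simpl.
    split; [|nra].
    assert (0 < geom_scale * q ^ (i - 1) * (1 - q)) by (repeat apply Rmult_lt_0_compat; lra).
    nra.
Qed.

Lemma geom_mesh_inc i : (i < n)%nat -> geom_mesh i < geom_mesh (S i).
Proof.
  intros H. destruct (Nat.eq_dec i 0) as [->|].
  - rewrite (geom_mesh_mid 1) by lia. pose proof (Rmin_l ((b - a) / 2) (/ lam)).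
    unfold geom_mesh, geom_scale in *. simpl. lra.
  - pose proof (geom_gap_le i ltac:(lia)). lra.
Qed.

Lemma geom_mesh_const i : (n <= i)%nat -> geom_mesh i = geom_mesh n.
Proof. intros H. rewrite !geom_mesh_end by lia. reflexivity. Qed.

Lemma geom_mesh_mono i k : (i <= k)%nat -> geom_mesh i <= geom_mesh k.
Proof. apply (tau_mono n geom_mesh ltac:(lia) geom_mesh_inc geom_mesh_const). Qed.

Lemma geom_gap_lam_le_1 i : (1 <= i < n)%nat -> lam * (geom_mesh (S i) - geom_mesh i) <= 1.
Proof.
  intros H. destruct (geom_gap_le i H). pose proof geom_scale_pos. pose proof lam_geom_scale_le_1.
  assert (q ^ (i - 1) <= 1) by (apply pow_le_1; lra).
  assert (geom_scale * q ^ (i - 1) <= geom_scale * 1) by (apply Rmult_le_compat_l; lra).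
  nra.
Qed.

Lemma geom_gap_lam_le_q i : (2 <= i < n)%nat -> lam * (geom_mesh (S i) - geom_mesh i) <= q.
Proof.
  intros H. destruct (geom_gap_le i ltac:(lia)). pose proof geom_scale_pos.
  pose proof lam_geom_scale_le_1.
  replace (i - 1)%nat with (S (i - 2)) in * by lia. simpl in *.
  assert (q ^ (i - 2) <= 1) by (apply pow_le_1; lra). pose proof (pow_lt q (i - 2) ltac:(lra)).
  assert (geom_scale * (q * q ^ (i - 2)) <= geom_scale * q) by (apply Rmult_le_compat_l; nra).
  nra.
Qed.

Lemma geom_gap_ratio j : (2 <= j < n)%nat ->
  geom_mesh (S j) - geom_mesh j <= 2 * q * (geom_mesh j - geom_mesh (pred j)).
Proof.
  intros H. destruct (geom_gap_le j ltac:(lia)) as [_ Hgap]. pose proof geom_scale_pos.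
  rewrite (geom_mesh_mid j), (geom_mesh_mid (pred j)) in * by lia.
  replace (j - 1)%nat with (S (pred j - 1)) in * by lia. simpl in *.
  pose proof (pow_lt q (pred j - 1) ltac:(lra)).
  set (X := geom_scale * q ^ (pred j - 1)) in *.
  assert (0 < X) by (apply Rmult_lt_0_compat; lra).
  assert (0 <= q * X * (1 - 2 * q)) by (apply Rmult_le_pos; [apply Rmult_le_pos|]; lra).
  replace (geom_scale * (q * q ^ (pred j - 1))) with (q * X) in * by (unfold X; ring).
  nra.
Qed.

Definition mesh_bump (j : nat) (x : R) : R :=
  bump N (clamp 0 1 ((x - geom_mesh j) / (geom_mesh (S j) - geom_mesh j))).
(* Only the subsegments from index 2 on, where the mesh is already geometric, carry a bump. *)
Definition bump_sign (j : nat) : R := if Nat.leb 2 j then (-1) ^ j else 0.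
Definition alt_bumps (x : R) : R := sum_f_R0 (fun j => bump_sign j * mesh_bump j x) (pred n).

Lemma mesh_bump_range j x : 0 <= mesh_bump j x <= 1.
Proof. apply bump_range, clamp_in_seg. lra. Qed.

Lemma mesh_bump_after j x : (j < n)%nat -> geom_mesh (S j) <= x -> mesh_bump j x = 0.
Proof.
  intros Hj Hx. unfold mesh_bump. pose proof (geom_mesh_inc j Hj).
  assert (1 <= (x - geom_mesh j) / (geom_mesh (S j) - geom_mesh j))
    by (apply Rcomplements.Rle_div_r; lra).
  unfold clamp. rewrite Rmin_left, Rmax_right by lra. apply bump_1.
Qed.

Lemma mesh_bump_before j x : (j < n)%nat -> x <= geom_mesh j -> mesh_bump j x = 0.
Proof.
  intros Hj Hx. unfold mesh_bump. pose proof (geom_mesh_inc j Hj).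
  assert ((x - geom_mesh j) / (geom_mesh (S j) - geom_mesh j) <= 0).
  { unfold Rdiv. apply Rmult_le_0_r; [lra | left; apply Rinv_0_lt_compat; lra]. }
  unfold clamp. rewrite Rmin_right, Rmax_left by lra. apply bump_0.
Qed.

Lemma continuous_mesh_bump j x : (j < n)%nat -> continuous (mesh_bump j) x.
Proof.
  intros Hj. pose proof (geom_mesh_inc j Hj). unfold mesh_bump.
  set (rescale := fun y => (y - geom_mesh j) / (geom_mesh (S j) - geom_mesh j)).
  apply (continuous_comp (fun y => clamp 0 1 (rescale y)) (bump N)).
  - apply (continuous_comp rescale (clamp 0 1)).
    + apply ex_derive_continuous_R. unfold rescale. auto_derive. lra.
    + apply continuous_clamp.
  - apply ex_derive_continuous_R. unfold bump. auto_derive. auto.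
Qed.

Lemma continuous_alt_bumps x : continuous alt_bumps x.
Proof.
  apply (continuous_sum_f_R0 (fun j y => bump_sign j * mesh_bump j y)). intros j Hj.
  apply (continuous_Rmult (fun _ => bump_sign j)); [apply continuous_const|].
  apply continuous_mesh_bump. lia.
Qed.

Lemma alt_bumps_local i x : (i < n)%nat -> geom_mesh i <= x <= geom_mesh (S i) ->
  alt_bumps x = bump_sign i * mesh_bump i x.
Proof.
  intros Hi Hx. unfold alt_bumps. apply (sum_f_R0_one (fun j => bump_sign j * mesh_bump j x) i); [lia|].
  intros j Hj Hne. destruct (Nat.lt_ge_cases j i).
  - rewrite mesh_bump_after by (lia || (pose proof (geom_mesh_mono (S j) i ltac:(lia)); lra)). ring.
  - rewrite mesh_bump_before by (lia || (pose proof (geom_mesh_mono (S i) j ltac:(lia)); lra)). ring.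
Qed.

Lemma alt_bumps_bound t : seg (geom_mesh 0) (geom_mesh n) t -> Rabs (alt_bumps t) <= 1.
Proof.
  intros Ht.
  destruct (exists_subsegment n geom_mesh ltac:(lia) t Ht) as [i [Hi Hti]].
  rewrite (alt_bumps_local i t Hi Hti), Rabs_mult.
  assert (Rabs (bump_sign i) <= 1).
  { unfold bump_sign. destruct (Nat.leb 2 i); [rewrite pow_1_abs | rewrite Rabs_R0]; lra. }
  pose proof (mesh_bump_range i t). rewrite (Rabs_pos_eq (mesh_bump i t)) by lra.
  pose proof (Rabs_pos (bump_sign i)). nra.
Qed.

Definition bump_moment (i : nat) : R :=
  RInt (fun x => mesh_bump i x * phi1 lam (geom_mesh i) (geom_mesh (S i)) x)
    (geom_mesh i) (geom_mesh (S i)).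

Lemma mom_left_alt_bumps i : (i < n)%nat ->
  mom_left lam geom_mesh alt_bumps (S i) = bump_sign i * bump_moment i.
Proof.
  intros Hi. unfold mom_left, bump_moment. simpl pred. pose proof (geom_mesh_inc i Hi).
  set (phi := phi1 lam (geom_mesh i) (geom_mesh (S i))).
  rewrite (RInt_ext_le _ (fun x => bump_sign i * (mesh_bump i x * phi x))).
  - apply (RInt_scal (fun x => mesh_bump i x * phi1 lam (geom_mesh i) (geom_mesh (S i)) x)).
    apply ex_RInt_mul_continuous; intros; [apply continuous_mesh_bump | apply continuous_phi1]; auto.
  - lra.
  - intros x Hx. rewrite (alt_bumps_local i x) by (auto; lra). ring.
Qed.

Lemma mom_right_alt_bumps_01 i : (i < 2)%nat -> mom_right lam geom_mesh alt_bumps i = 0.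
Proof.
  intros Hi. unfold mom_right. pose proof (geom_mesh_inc i ltac:(lia)).
  rewrite (RInt_ext_le _ (fun _ => 0)); [rewrite RInt_const_R; eq_in_R; ring | lra |].
  intros x Hx. rewrite (alt_bumps_local i x) by (lia || lra).
  unfold bump_sign. destruct (Nat.leb_spec 2 i); [lia | ring].
Qed.

Lemma RInt_one_sub_mesh_bump i : (i < n)%nat ->
  RInt (fun x => 1 - mesh_bump i x) (geom_mesh i) (geom_mesh (S i))
  = (geom_mesh (S i) - geom_mesh i) / (2 * INR N + 1).
Proof.
  intros Hi. pose proof (geom_mesh_inc i Hi).
  rewrite <- RInt_one_sub_bump by auto. apply RInt_ext_le; [lra|]. intros x Hx.
  unfold mesh_bump. rewrite clamp_id; [reflexivity|]. split.
  - apply Rdiv_le_0_compat; lra.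
  - apply Rcomplements.Rle_div_l; lra.
Qed.

Section BumpMoment.
Variable i : nat.
Hypothesis Hi : (i < n)%nat.
Let phi := phi1 lam (geom_mesh i) (geom_mesh (S i)).

Lemma ex_RInt_bump_mul_phi : ex_RInt (fun x => mesh_bump i x * phi x) (geom_mesh i) (geom_mesh (S i)).
Proof.
  apply ex_RInt_mul_continuous; intros; [apply continuous_mesh_bump | apply continuous_phi1]; auto.
  apply geom_mesh_inc, Hi.
Qed.

Lemma phi_range x : geom_mesh i < x < geom_mesh (S i) -> 0 <= phi x <= 1.
Proof.
  intros Hx. pose proof (geom_mesh_inc i Hi).
  split; [apply phi1_nonneg | apply phi1_le_1]; auto; lra.
Qed.

Lemma mass_sub_bump_moment_le : mass lam (geom_mesh i) (geom_mesh (S i)) - bump_moment i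
  <= RInt (fun x => 1 - mesh_bump i x) (geom_mesh i) (geom_mesh (S i)).
Proof.
  pose proof (geom_mesh_inc i Hi).
  assert (EV : ex_RInt phi (geom_mesh i) (geom_mesh (S i)))
    by (apply ex_RInt_continuous_R; intros; apply continuous_phi1; auto).
  pose proof ex_RInt_bump_mul_phi as EF.
  assert (Hle : RInt (fun x => 1 * phi x + (-1) * (mesh_bump i x * phi x))
                  (geom_mesh i) (geom_mesh (S i))
                <= RInt (fun x => 1 - mesh_bump i x) (geom_mesh i) (geom_mesh (S i))).
  { apply RInt_le; [lra | | |].
    - apply (ex_RInt_plus (fun x => 1 * phi x) (fun x => (-1) * (mesh_bump i x * phi x)));
        [apply (ex_RInt_scal phi) | apply (ex_RInt_scal (fun x => mesh_bump i x * phi x))]; auto.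
    - apply ex_RInt_continuous_R. intros x.
      apply (continuous_minus (fun _ => 1)); [apply continuous_const | apply continuous_mesh_bump; auto].
    - intros x Hx. pose proof (phi_range x Hx). pose proof (mesh_bump_range i x). nra. }
  rewrite RInt_lin_comb in Hle by auto. unfold mass, bump_moment. fold phi. lra.
Qed.

Lemma bump_moment_bounds : 0 <= bump_moment i /\
  mass lam (geom_mesh i) (geom_mesh (S i)) - / (2 * INR N + 1) * (geom_mesh (S i) - geom_mesh i)
    <= bump_moment i <= mass lam (geom_mesh i) (geom_mesh (S i)).
Proof.
  pose proof (geom_mesh_inc i Hi). pose proof ex_RInt_bump_mul_phi as EF.
  pose proof mass_sub_bump_moment_le. pose proof (RInt_one_sub_mesh_bump i Hi).
  split; [|split].
  - unfold bump_moment. fold phi. replace 0 with (RInt (fun _ => 0) (geom_mesh i) (geom_mesh (S i)))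
      by (rewrite RInt_const_R; eq_in_R; ring).
    apply RInt_le; [lra | apply ex_RInt_continuous_R; intros; apply continuous_const | exact EF |].
    intros x Hx. pose proof (phi_range x Hx). pose proof (mesh_bump_range i x). apply Rmult_le_pos; lra.
  - unfold Rdiv in *. lra.
  - unfold mass, bump_moment. fold phi.
    apply RInt_le; [lra | exact EF | apply ex_RInt_continuous_R; intros; apply continuous_phi1; auto |].
    intros x Hx. pose proof (phi_range x Hx). pose proof (mesh_bump_range i x). nra.
Qed.
End BumpMoment.

Definition geom_list : list R := map geom_mesh (seq 0 (S n)).

Lemma geom_list_length : length geom_list = S n.
Proof. unfold geom_list. rewrite length_map, length_seq. reflexivity. Qed.

Lemma geom_list_nth i : (i <= n)%nat -> nth i geom_list 0 = geom_mesh i.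
Proof.
  intros H. unfold geom_list.
  rewrite (nth_indep _ 0 (geom_mesh 0%nat)) by (rewrite length_map, length_seq; lia).
  rewrite map_nth, seq_nth by lia. reflexivity.
Qed.

Lemma geom_list_partition : is_partition a b geom_list.
Proof.
  unfold is_partition. rewrite geom_list_length. split; [lia|]. split; [|split].
  - rewrite geom_list_nth by lia. reflexivity.
  - rewrite geom_list_nth by lia. apply geom_mesh_end. lia.
  - intros i Hi. rewrite !geom_list_nth by lia. apply geom_mesh_inc. lia.
Qed.

Lemma proj_value_alt_bumps : exists y, proj_values a b lam geom_list y /\
  3 - (9 * q + 12 / (2 * INR N + 1)) - 3 * (11/12) ^ (n - 2) - 168 * q <= y.
Proof.
  assert (Hn1 : (1 <= n)%nat) by lia.
  assert (Ha : geom_mesh 0 = a) by reflexivity.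
  assert (Hb : geom_mesh n = b) by (apply geom_mesh_end; lia).
  assert (Htheta : 0 <= / (2 * INR N + 1))
    by (pose proof (pos_INR N); left; apply Rinv_0_lt_compat; lra).
  assert (Hcont : continuous_on (seg (geom_mesh 0) (geom_mesh n)) alt_bumps)
    by (apply continuous_on_forall; intros; apply continuous_alt_bumps).
  destruct (orth_proj_last_coef_lower lam n geom_mesh Hlam Hn1 geom_mesh_inc geom_mesh_const
      q (/ (2 * INR N + 1)) alt_bumps bump_moment Hq Htheta Hn3 Hcont alt_bumps_bound)
    as [c [Horth Hc]].
  - rewrite (mom_left_alt_bumps 0) by lia. unfold bump_sign. simpl. ring.
  - rewrite (mom_left_alt_bumps 1) by lia. unfold bump_sign. simpl. ring.
  - apply mom_right_alt_bumps_01. lia.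
  - apply mom_right_alt_bumps_01. lia.
  - intros i Hi. rewrite mom_left_alt_bumps by lia.
    unfold bump_sign. destruct (Nat.leb_spec 2 i); [|lia].
    split; [reflexivity | apply bump_moment_bounds; lia].
  - apply geom_gap_lam_le_1.
  - apply geom_gap_lam_le_q.
  - apply geom_gap_ratio.
  - exists (Rabs (c n)). split; [|unfold Rdiv; lra].
    pose proof geom_list_length as HL. pose proof geom_list_nth as HD.
    exists alt_bumps, (spline_of_coefs lam n geom_mesh c), b. rewrite <- Ha, <- Hb.
    split; [exact Hcont|]. split; [apply alt_bumps_bound|].
    split; [split|].
    + apply (is_Lspline_iff_mesh lam n geom_mesh geom_list _ HL HD).
      exact (spline_of_coefs_is_mesh_spline lam n geom_mesh Hlam Hn1 geom_mesh_inc geom_mesh_const c).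
    + intros s Hs. unfold L2ip. apply Horth.
      exact (proj1 (is_Lspline_iff_mesh lam n geom_mesh geom_list s HL HD) Hs).
    + rewrite (spline_of_coefs_node lam n geom_mesh Hlam Hn1 geom_mesh_inc geom_mesh_const) by lia.
      split; [|reflexivity].
      pose proof (geom_mesh_mono 0 n ltac:(lia)). unfold seg. lra.
Qed.
End GeometricMesh.

Lemma proj_values_near_3 (a b lam : R) : a < b -> 0 < lam -> forall eps, 0 < eps ->
  exists D, is_partition a b D /\ exists y, proj_values a b lam D y /\ 3 - eps <= y.
Proof.
  intros Hab Hlam eps Heps.
  set (q := Rmin (1/2) (eps / 708)).
  assert (Hq : 0 < q <= 1/2) by (split; [apply Rmin_glb_lt; lra | apply Rmin_l]).
  assert (Hq2 : q <= eps / 708) by apply Rmin_r.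
  destruct (INR_archimed eps 48 Heps) as [N HN].
  destruct (pow_lt_1_zero (11/12) ltac:(rewrite Rabs_pos_eq; lra) (eps / 12) ltac:(lra)) as [M HM].
  set (n := (M + 3)%nat).
  exists (geom_list a b lam q n). split; [apply geom_list_partition; (lra || lia)|].
  destruct (proj_value_alt_bumps a b lam q N n Hab Hlam Hq ltac:(lia)) as [y [Hy Hbound]].
  exists y. split; [exact Hy|].
  assert (3 * (11/12) ^ (n - 2) <= eps / 4).
  { specialize (HM (n - 2)%nat ltac:(unfold n; lia)).
    rewrite Rabs_pos_eq in HM by (apply pow_le; lra). lra. }
  assert (12 / (2 * INR N + 1) <= eps / 4).
  { pose proof (pos_INR N). apply Rcomplements.Rle_div_l; nra. }
  lra.
Qed.

Theorem mainTheorem1 (a b lam : R) (hab : a < b) (hlam : 0 < lam) :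
  Rbar_is_lub
    (fun z : Rbar => exists D : list R, is_partition a b D /\ z = proj_opnorm a b lam D)
    (Finite 3).
Proof.
  split.
  - intros z [D [HD ->]]. apply proj_opnorm_le_3; auto.
  - intros u Hu.
    assert (Hlow : forall eps, 0 < eps -> Rbar_le (Finite (3 - eps)) u).
    { intros eps Heps. destruct (proj_values_near_3 a b lam hab hlam eps Heps) as [D [HD [y [Hy Hy3]]]].
      apply Rbar_le_trans with (proj_opnorm a b lam D); [|apply Hu; exists D; auto].
      apply Rbar_le_trans with (Finite y); [exact Hy3|].
      apply (proj1 (Lub_Rbar_correct (proj_values a b lam D))), Hy. }
    destruct u as [u| |]; simpl in *; auto.
    + apply Rnot_lt_le. intros H. specialize (Hlow ((3 - u) / 2) ltac:(lra)). simpl in Hlow. lra.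
    + exact (Hlow 1 Rlt_0_1).
Qed.
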